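(* Let $d\ge2$ and let $(X_n)$ be a recurrent rotor walk on $\mathbb{T}_d$ with i.i.d. random initial configuration of law $(r_j)_{0\le j\le d}$, i.e. $\mathbb{E}[\rho(v)]\ge d-1$ and $r_d>0$. Let $g_0\equiv0$ and, for $k\ge1$ and $x\in\Sigma_d^{\mathbb{N}}$, $g_k(x)=\mathbb{E}\big[f_{R_{\tau_k}}(x)\big]$. Then for every $k\ge1$, every $x=(x_1,x_2,\dots)\in\Sigma_d^{\mathbb{N}}$ and every $i\in\{0,\dots,d-1\}$, $$g_k(ix)=1+\big(1-p_{d-i}\big)\,g_{k-1}(x)+p_{d-i}\,g_k(x),$$ where $ix=(i,x_1,x_2,\dots)$ and $p_l=\sum_{j=0}^{l-1}r_j$.
   Context: Let $\widetilde{\mathbb{T}}_d$ be the rooted tree with root $r$ in which every vertex has exactly $d$ children, and let $\mathbb{T}_d$ be $\widetilde{\mathbb{T}}_d$ together with a sink vertex $o$ joined to $r$. Let $\Sigma_d=\{0,\dots,d-1\}$; identify $\widetilde{\mathbb{T}}_d$ with the set of finite words over $\Sigma_d$, the root $r$ being the empty word $\epsilon$ and the children of a word $w$ being the words $wk$, $k\in\Sigma_d$. For $v\in\widetilde{\mathbb{T}}_d$ its neighbours are labelled $v^{(0)}$ (the parent, with $r^{(0)}=o$) and $v^{(d-k)}=vk$ for $k\in\Sigma_d$. The rotor walk $(X_n)$ starts at $X_0=r$; if $X_n=v\ne o$ then $\rho(v)$ is replaced by $\rho(v)+1\pmod{d+1}$ (other rotors unchanged) and $X_{n+1}=v^{(\text{new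 value of }\rho(v))}$; if $X_n=o$ then $X_{n+1}=r$. The initial rotors $\rho(v)\in\{0,\dots,d\}$ are i.i.d. with $\mathbb{P}[\rho(v)=j]=r_j$. The range is $R_n=\{X_0,\dots,X_n\}\setminus\{o\}$, and $\tau_0=0$, $\tau_k=\inf\{n>\tau_{k-1}:X_n=o\}$. For a finite connected subset $A\subset\widetilde{\mathbb{T}}_d$ containing $\epsilon$ and an infinite sequence $x=(x_1,x_2,\dots)\in\Sigma_d^{\mathbb{N}}$ (corresponding to the $d$-ary expansion $\sum_i x_id^{-i}$ of a point of $[0,1]$), the contour of $A$ is $f_A(x)=\min\{n\ge1: x_1x_2\cdots x_n\notin A\}$. *)

From Stdlib Require Import Reals List Arith.
Import ListNotations.
Open Scope R_scope.

(* Vertices of the tree T~_d: finite words over {0,...,d-1}, as lists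
   (first letter = head).  The root r is the empty word [];
   the sink o is represented by [None] in positions. *)
Definition word := list nat.

Definition sumR (n : nat) (f : nat -> R) : R :=
  fold_right Rplus 0 (map f (seq 0 n)).

Definition p (r : nat -> R) (l : nat) : R := sumR l r.

Fixpoint words_len (d n : nat) : list word :=
  match n with
  | O => [nil]
  | S m => flat_map (fun w => map (fun k => w ++ [k]) (seq 0 d)) (words_len d m)
  end.
Definition words_upto (d N : nat) : list word := flat_map (words_len d) (seq 0 N).

(* Expectation over i.i.d. rotors rho(v) ~ (r_j)_{0<=j<=d} for v in vs
   (other vertices get the irrelevant default rotor 0). *)
Fixpoint Efin (r : nat -> R) (d : nat) (vs : list word)
  (F : (word -> nat) -> R) : R :=
  match vs with
  | nil => F (fun _ => 0%nat)
  | v :: vs' =>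
      sumR (S d) (fun j => r j *
        Efin r d vs' (fun c => F (fun w => if list_eq_dec Nat.eq_dec w v then j else c w)))
  end.

(* Rotor walk run from state (pos, rho, visits to o so far, range so far),
   for at most [fuel] steps, stopped at the k-th visit to o (time tau_k)
   or upon reaching a vertex of depth >= N (time sigma_N).
   Returns the range (list of visited vertices of the tree, o excluded). *)
Fixpoint run (d k : nat) (fuel N : nat) (pos : option word)
  (rho : word -> nat) (visits : nat) (range : list word) : list word :=
  match fuel with
  | O => range
  | S f =>
    if Nat.eqb visits k then range else
    match pos with
    | None => run d k f N (Some nil) rho visits (nil :: range)
    | Some v =>
      if Nat.leb N (length v) then range else
      let r' := Nat.modulo (rho v + 1) (d + 1) in
      let rho' := fun w => if list_eq_dec Nat.eq_dec w v then r' else rho w in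
      let next : option word :=
        if Nat.eqb r' 0 then
          (match v with nil => None | _ => Some (removelast v) end)
        else Some (v ++ [(d - r')%nat]) in
      match next with
      | None => run d k f N None rho' (S visits) range
      | Some w => run d k f N (Some w) rho' visits (w :: range)
      end
    end
  end.

(* x_1 ... x_n, where the sequence x is given as x 0 = x_1, x 1 = x_2, ... *)
Definition prefix (x : nat -> nat) (n : nat) : word := map x (seq 0 n).

Fixpoint ft (A : list word) (x : nat -> nat) (n m : nat) : nat :=
  match m with
  | O => n
  | S m' => if in_dec (list_eq_dec Nat.eq_dec) (prefix x n) A
            then ft A x (S n) m' else n
  end.

(* min (f_A(x), N), where f_A(x) = min {n >= 1 : x_1...x_n notin A} *)
Definition contour_trunc (A : list word) (x : nat -> nat) (N : nat) : nat :=
  match N with O => O | S M => ft A x 1 M end.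

(* E[ min( f_{R_{tau_k /\ sigma_N /\ N}}(x), N ) ]; this random variable only
   depends on the rotors at depth < N, and it increases (in N) pointwise to
   f_{R_{tau_k}}(x); by monotone convergence E[f_{R_{tau_k}}(x)] is the
   supremum over N of these truncated expectations. *)
Definition Etrunc (r : nat -> R) (d k : nat) (x : nat -> nat) (N : nat) : R :=
  Efin r d (words_upto d N)
    (fun c => INR (contour_trunc (run d k N N (Some nil) c 0 [nil]) x N)).

(* Extended nonnegative reals: None = +infinity *)
Definition ER := option R.
Definition ER_plus (a b : ER) : ER :=
  match a, b with Some x, Some y => Some (x + y) | _, _ => None end.
(* scalar multiplication by a real, with the convention 0 * infinity = 0 *)
Definition ER_scal (a : R) (b : ER) : ER :=
  match b with
  | Some y => Some (a * y)
  | None => if Req_dec_T a 0 then Some 0 else None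
  end.

Definition ext_sup (u : nat -> R) (v : ER) : Prop :=
  match v with
  | Some l => is_lub (fun y => exists n, y = u n) l
  | None => ~ bound (fun y => exists n, y = u n)
  end.

Definition g_val (r : nat -> R) (d k : nat) (x : nat -> nat) (v : ER) : Prop :=
  match k with
  | O => v = Some 0
  | S _ => ext_sup (Etrunc r d k x) v
  end.

Definition scons (i : nat) (x : nat -> nat) : nat -> nat :=
  fun n => match n with O => i | S m => x m end.

(* Restricted to the subtree below child [i], the rotor walk is itself a rotor walk, whose sink
   is the root of the tree and whose rotors are those of the subtree.  The root rotor advances by
   one at each visit of the root, so during the first [k] excursions from the sink the walk makes
   [k] excursions into the subtree when rho(root) < d - i, an event of probability p_{d-i}, and
   [k - 1] otherwise.  Hence f_R(ix) = 1 + f_R'(x), with R' the range of the subtree walk, whose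
   rotors are independent of rho(root) and distributed like the whole configuration.  Taking
   expectations gives the identity for the expectations truncated at depth N, up to an error at
   most N times the probability that the walk has not completed its k excursions inside a bounded
   region.  That probability tends to 0: by the same decomposition the completion probabilities
   satisfy q_k(M') >= E[q_k(M)^(d - rho) q_(k-1)(M)^rho], and when E[rho] >= d - 1 and r_d > 0
   this recursion forces sup_M q_k(M) = 1, by induction on k. *)

From Stdlib Require Import Reals List Arith Lia Lra FunctionalExtensionality Permutation Classical.
Import ListNotations.
Open Scope R_scope.

Lemma sumR_S n f : sumR (S n) f = sumR n f + f n.
Proof.
  unfold sumR. rewrite seq_S, map_app, fold_right_app. simpl.
  generalize (map f (seq 0 n)). intros l. induction l as [|a l IH]; simpl; lra.
Qed.

Lemma sumR_ext n f g : (forall j, (j < n)%nat -> f j = g j) -> sumR n f = sumR n g.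
Proof. intros H. induction n; auto. rewrite !sumR_S, IHn, H; auto. Qed.

Lemma sumR_plus n f g : sumR n (fun j => f j + g j) = sumR n f + sumR n g.
Proof. induction n; [unfold sumR; simpl; lra|]. rewrite !sumR_S, IHn. lra. Qed.

Lemma sumR_scal_l n a f : sumR n (fun j => a * f j) = a * sumR n f.
Proof. induction n; [unfold sumR; simpl; lra|]. rewrite !sumR_S, IHn. lra. Qed.

Lemma sumR_scal_r n a f : sumR n (fun j => f j * a) = sumR n f * a.
Proof. induction n; [unfold sumR; simpl; lra|]. rewrite !sumR_S, IHn. lra. Qed.

Lemma sumR_swap n m (f : nat -> nat -> R) :
  sumR n (fun j => sumR m (fun l => f j l)) = sumR m (fun l => sumR n (fun j => f j l)).
Proof.
  induction n.
  - unfold sumR at 1; simpl. induction m; [reflexivity|]. rewrite sumR_S, <- IHm. unfold sumR; simpl; lra.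
  - rewrite sumR_S, IHn, <- sumR_plus. apply sumR_ext. intros l _. rewrite sumR_S. lra.
Qed.

Lemma sumR_le n f g : (forall j, (j < n)%nat -> f j <= g j) -> sumR n f <= sumR n g.
Proof.
  intros H. induction n; [unfold sumR; simpl; lra|]. rewrite !sumR_S.
  assert (f n <= g n) by (apply H; lia).
  assert (sumR n f <= sumR n g) by (apply IHn; intros; apply H; lia). lra.
Qed.

Lemma sumR_ge0 n f : (forall j, (j < n)%nat -> 0 <= f j) -> 0 <= sumR n f.
Proof.
  intros H. replace 0 with (sumR n (fun _ => 0 * 0)) by (rewrite sumR_scal_l; lra).
  apply sumR_le. intros j Hj. rewrite Rmult_0_l. auto.
Qed.

Lemma sumR_le_len n m f : (n <= m)%nat -> (forall j, (j < m)%nat -> 0 <= f j) ->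
  sumR n f <= sumR m f.
Proof.
  intros H Hf. induction H; [lra|]. rewrite sumR_S.
  assert (0 <= f m) by (apply Hf; lia). assert (sumR n f <= sumR m f) by (apply IHle; auto). lra.
Qed.

Lemma sumR_if_lt n t f g : (t <= n)%nat ->
  sumR n (fun j => if Nat.ltb j t then f j else g j) = sumR t f + (sumR n g - sumR t g).
Proof.
  intros H. induction H.
  - rewrite (sumR_ext t _ f); [lra|]. intros j Hj. destruct (Nat.ltb_spec j t); auto; lia.
  - rewrite !sumR_S, IHle. destruct (Nat.ltb_spec m t); [lia|]. lra.
Qed.

Lemma p_bounds r d l : (forall j, (j <= d)%nat -> 0 <= r j) -> sumR (S d) r = 1 ->
  (l <= S d)%nat -> 0 <= p r l <= 1.
Proof.
  intros Hr Hs Hl. unfold p. split.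
  - apply sumR_ge0. intros j Hj. apply Hr. lia.
  - rewrite <- Hs. apply sumR_le_len; auto. intros j Hj. apply Hr. lia.
Qed.

Lemma pow_bounds_01 a n : 0 <= a <= 1 -> 0 <= a ^ n <= 1.
Proof. intros H. split; [apply pow_le; lra|]. rewrite <- (pow1 n). apply pow_incr. lra. Qed.

Lemma pow_decr_01 a n m : 0 <= a <= 1 -> (n <= m)%nat -> a ^ m <= a ^ n.
Proof.
  intros Ha H. induction H; [lra|]. simpl. pose proof (pow_bounds_01 a m Ha).
  assert (a * a ^ m <= 1 * a ^ m) by (apply Rmult_le_compat_r; lra). lra.
Qed.

Lemma pow_ge_bernoulli b n : 0 <= b -> 1 - INR n * (1 - b) <= b ^ n.
Proof.
  intros Hb. induction n; [simpl; lra|]. rewrite S_INR. change (b ^ S n) with (b * b ^ n).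
  assert (b * (1 - INR n * (1 - b)) <= b * b ^ n) by (apply Rmult_le_compat_l; lra).
  assert (0 <= INR n * (1 - b) ^ 2) by (apply Rmult_le_pos; [apply pos_INR|apply pow2_ge_0]).
  nra.
Qed.

Lemma pow_ge_bernoulli2 a e : 0 <= a <= 1 ->
  1 - INR (S e) * (1 - a) + INR e * (1 - a) ^ 2 <= a ^ S e.
Proof.
  intros Ha. induction e; [simpl; lra|].
  rewrite !S_INR in *. change (a ^ S (S e)) with (a * a ^ S e).
  assert (0 <= INR e) by apply pos_INR.
  assert (a * (1 - (INR e + 1) * (1 - a) + INR e * (1 - a) ^ 2) <= a * a ^ S e)
    by (apply Rmult_le_compat_l; lra).
  assert (0 <= INR e * (1 - a) ^ 2 * a)
    by (apply Rmult_le_pos; [apply Rmult_le_pos; [lra|apply pow_le; lra]|lra]).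
  simpl in *. nra.
Qed.

Section Recurrence.

Variables (d : nat) (r : nat -> R).
Hypothesis r_nonneg : forall j, (j <= d)%nat -> 0 <= r j.
Hypothesis r_sum : sumR (S d) r = 1.
Hypothesis r_mean : INR (d - 1) <= sumR (S d) (fun j => INR j * r j).
Hypothesis d_pos : (1 <= d)%nat.

Lemma mean_deficit_le1 : sumR (S d) (fun j => r j * INR (d - j)) <= 1.
Proof.
  rewrite (sumR_ext (S d) _ (fun j => INR d * r j + (-1) * (INR j * r j))).
  - rewrite sumR_plus, !sumR_scal_l, r_sum. rewrite minus_INR in r_mean by lia.
    simpl in r_mean. lra.
  - intros j Hj. rewrite minus_INR by lia. lra.
Qed.

Lemma pgf_deficit_ge a : 0 <= a <= 1 ->
  a + r d * (1 - a) ^ 2 <= sumR (S d) (fun j => r j * a ^ (d - j)).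
Proof.
  intros Ha. set (t := 1 - a).
  assert (Hterm : forall j, (j < d)%nat ->
    (1 - t ^ 2) * r j + (- (t - t ^ 2)) * (r j * INR (d - j)) <= r j * a ^ (d - j)).
  { intros j Hj. replace (d - j)%nat with (S (d - j - 1)) by lia.
    pose proof (pow_ge_bernoulli2 a (d - j - 1) Ha) as Hb.
    replace ((1 - t ^ 2) * r j + - (t - t ^ 2) * (r j * INR (S (d - j - 1))))
      with (r j * (1 - INR (S (d - j - 1)) * (1 - a) + INR (d - j - 1) * (1 - a) ^ 2))
      by (unfold t; rewrite S_INR; ring).
    apply Rmult_le_compat_l; auto. apply r_nonneg. lia. }
  assert (Hsum := sumR_le d _ _ Hterm).
  rewrite sumR_plus, sumR_scal_l, sumR_scal_l in Hsum.
  assert (Hmu := mean_deficit_le1).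
  rewrite sumR_S, Nat.sub_diag, Rmult_0_r, Rplus_0_r in Hmu.
  rewrite sumR_S in r_sum |- *. rewrite Nat.sub_diag, pow_O, Rmult_1_r.
  assert (0 <= t <= 1) by (unfold t; lra).
  assert (a = 1 - t) by (unfold t; lra).
  replace (sumR d r) with (1 - r d) in Hsum by lra.
  assert (0 <= (t - t ^ 2) * (1 - sumR d (fun j => r j * INR (d - j)))) by (apply Rmult_le_pos; nra).
  nra.
Qed.

Lemma pgf_mix_ge a b : 0 <= a <= 1 -> 0 <= b <= 1 ->
  sumR (S d) (fun j => r j * a ^ (d - j)) - INR d * (1 - b)
  <= sumR (S d) (fun j => r j * (a ^ (d - j) * b ^ j)).
Proof.
  intros Ha Hb. set (phi := sumR (S d) (fun j => r j * a ^ (d - j))).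
  assert (Hmix : b ^ d * phi <= sumR (S d) (fun j => r j * (a ^ (d - j) * b ^ j))).
  { unfold phi. rewrite <- sumR_scal_l. apply sumR_le. intros j Hj.
    pose proof (pow_bounds_01 a (d - j) Ha). pose proof (pow_decr_01 b j d Hb ltac:(lia)).
    pose proof (r_nonneg j ltac:(lia)).
    assert (0 <= r j * a ^ (d - j)) by (apply Rmult_le_pos; lra).
    replace (r j * (a ^ (d - j) * b ^ j)) with (b ^ j * (r j * a ^ (d - j))) by ring.
    apply Rmult_le_compat_r; lra. }
  assert (Hphi : 0 <= phi <= 1).
  { unfold phi. split.
    - apply sumR_ge0. intros j Hj. pose proof (pow_bounds_01 a (d - j) Ha).
      pose proof (r_nonneg j ltac:(lia)). nra.
    - rewrite <- r_sum. apply sumR_le. intros j Hj. pose proof (pow_bounds_01 a (d - j) Ha).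
      pose proof (r_nonneg j ltac:(lia)). nra. }
  pose proof (pow_ge_bernoulli b d (proj1 Hb)). assert (0 <= INR d) by apply pos_INR.
  assert ((1 - INR d * (1 - b)) * phi <= b ^ d * phi) by (apply Rmult_le_compat_r; lra).
  assert (INR d * (1 - b) * phi <= INR d * (1 - b)) by (rewrite <- (Rmult_1_r (INR d * (1 - b))) at 2;
    apply Rmult_le_compat_l; [apply Rmult_le_pos|]; lra).
  lra.
Qed.

Lemma pgf_mix_gain a b : 0 <= a <= 1 -> 0 <= b <= 1 ->
  a + r d * (1 - a) ^ 2 - INR d * (1 - b) <= sumR (S d) (fun j => r j * (a ^ (d - j) * b ^ j)).
Proof.
  intros Ha Hb. pose proof (pgf_deficit_ge a Ha). pose proof (pgf_mix_ge a b Ha Hb). lra.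
Qed.

Hypothesis r_top : 0 < r d.

Variable q : nat -> nat -> R.
Hypothesis q_bounds : forall m F, 0 <= q m F <= 1.
Hypothesis q_mono : forall m F F', (F <= F')%nat -> q m F <= q m F'.
Hypothesis q_zero : forall F, q 0%nat F = 1.
Hypothesis q_rec : forall m F, (1 <= m)%nat -> exists M,
  sumR (S d) (fun j => r j * (q m F ^ (d - j) * q (m - 1)%nat F ^ j)) <= q m M.

(* If [q (S m)] stayed below [1 - eps], each use of the recursion would raise it by
   [r d * eps ^ 2 / 2], which a quantity bounded by 1 cannot sustain. *)
Lemma q_escape_step m eps : 0 < eps ->
  (forall eta, 0 < eta -> exists F, 1 - eta <= q m F) ->
  (forall F, q (S m) F < 1 - eps) ->
  forall F, exists M, q (S m) F + r d * eps ^ 2 / 2 <= q (S m) M.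
Proof.
  intros Heps IH Hfar F.
  assert (HdI : 0 <= INR d) by apply pos_INR.
  set (eta := r d * eps ^ 2 / (2 * (INR d + 1))).
  assert (Heta : 0 < eta) by (unfold eta; apply Rdiv_lt_0_compat; [apply Rmult_lt_0_compat; auto; apply pow_lt|]; lra).
  destruct (IH eta Heta) as [F2 HF2].
  set (F' := Nat.max F F2).
  set (a := q (S m) F'). set (b := q m F').
  assert (Ha : q (S m) F <= a) by (apply q_mono; unfold F'; lia).
  assert (Hb : 1 - eta <= b) by (pose proof (q_mono m F2 F' ltac:(unfold F'; lia)); unfold b; lra).
  destruct (q_rec (S m) F' ltac:(lia)) as [M HM]. exists M.
  replace (S m - 1)%nat with m in HM by lia. fold a b in HM.
  pose proof (pgf_mix_gain a b (q_bounds _ _) (q_bounds _ _)) as Hgain.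
  assert (Hfar' : eps <= 1 - a) by (pose proof (Hfar F'); unfold a; lra).
  assert (r d * eps ^ 2 <= r d * (1 - a) ^ 2) by (apply Rmult_le_compat_l; [lra|]; simpl; nra).
  assert (INR d * (1 - b) <= INR d * eta) by (apply Rmult_le_compat_l; lra).
  assert (INR d * eta <= r d * eps ^ 2 / 2).
  { unfold eta. apply Rmult_le_reg_r with (2 * (INR d + 1)); [lra|].
    field_simplify; [|lra]. assert (0 <= r d * eps ^ 2) by (apply Rmult_le_pos; [lra|apply pow_le; lra]). nra. }
  lra.
Qed.

Lemma q_escape m eps : 0 < eps -> exists F, 1 - eps <= q m F.
Proof.
  revert eps. induction m as [|m IH]; intros eps Heps.
  - exists 0%nat. rewrite q_zero. lra.
  - apply NNPP. intros Hno.
    assert (Hfar : forall F, q (S m) F < 1 - eps).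
    { intros F. apply Rnot_le_lt. intros H. apply Hno. exists F. auto. }
    set (delta := r d * eps ^ 2 / 2).
    assert (Hdelta : 0 < delta) by (unfold delta; apply Rmult_lt_0_compat; [apply Rmult_lt_0_compat; auto; apply pow_lt|]; lra).
    assert (Hgrow : forall n, exists F, INR n * delta <= q (S m) F).
    { induction n as [|n [F HF]].
      - exists 0%nat. rewrite Rmult_0_l. apply q_bounds.
      - destruct (q_escape_step m eps Heps IH Hfar F) as [M HM].
        exists M. rewrite S_INR. fold delta in HM. lra. }
    destruct (INR_archimed delta 1 Hdelta) as [n Hn].
    destruct (Hgrow n) as [F HF]. pose proof (q_bounds (S m) F). lra.
Qed.

End Recurrence.

Definition nondecr (U : nat -> R) : Prop := forall n m, (n <= m)%nat -> U n <= U m.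

Lemma ext_sup_unique U u v : ext_sup U u -> ext_sup U v -> u = v.
Proof.
  destruct u as [l1|], v as [l2|]; simpl; intros H1 H2.
  - f_equal. eapply is_lub_u; eauto.
  - exfalso. apply H2. exists l1. apply H1.
  - exfalso. apply H1. exists l2. apply H2.
  - auto.
Qed.

Lemma ext_sup_const a : ext_sup (fun _ => a) (Some a).
Proof.
  simpl. split.
  - intros y [n ->]. lra.
  - intros b Hb. apply Hb. exists 0%nat. auto.
Qed.

Lemma ext_sup_scal U u al : (forall n, 0 <= U n) -> 0 <= al -> ext_sup U u ->
  ext_sup (fun n => al * U n) (ER_scal al u).
Proof.
  intros HU Hal Hu. destruct (Req_dec_T al 0) as [E|E].
  - subst. replace (ER_scal 0 u) with (Some 0).
    + replace (fun n => 0 * U n) with (fun _ : nat => 0)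
        by (apply functional_extensionality; intros; ring).
      apply ext_sup_const.
    + destruct u; simpl; [f_equal; ring|]. destruct (Req_dec_T 0 0); congruence.
  - assert (Hpos : 0 < al) by lra.
    destruct u as [l|]; simpl in *.
    + destruct Hu as [Hub Hlub]. split.
      * intros y [n ->]. apply Rmult_le_compat_l; auto. apply Hub. exists n; auto.
      * intros b Hb. replace b with (al * (b / al)) by (field; lra).
        apply Rmult_le_compat_l; [lra|]. apply Hlub. intros y [n ->].
        apply Rmult_le_reg_l with al; auto. replace (al * (b / al)) with b by (field; lra).
        apply Hb. exists n. auto.
    + destruct (Req_dec_T al 0) as [E0|E0]; [congruence|].
      intros [M HM]. apply Hu. exists (M / al). intros y [n ->].
      apply Rmult_le_reg_l with al; auto. replace (al * (M / al)) with M by (field; lra).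
      apply HM. exists n; auto.
Qed.

Lemma ext_sup_plus U V u v : nondecr U -> nondecr V -> ext_sup U u -> ext_sup V v ->
  ext_sup (fun n => U n + V n) (ER_plus u v).
Proof.
  intros HU HV Hu Hv.
  assert (Hunb : forall W W', nondecr W' -> ~ bound (fun y => exists n, y = W n) ->
                   ~ bound (fun y => exists n, y = W n + W' n)).
  { intros W W' HW' HW [M HM]. apply HW. exists (M - W' 0%nat). intros y [n ->].
    assert (W' 0%nat <= W' n) by (apply HW'; lia).
    assert (W n + W' n <= M) by (apply HM; exists n; auto). lra. }
  destruct u as [l1|], v as [l2|]; simpl in *.
  - destruct Hu as [Hu1 Hu2], Hv as [Hv1 Hv2]. split.
    + intros y [n ->]. assert (U n <= l1) by (apply Hu1; exists n; auto).
      assert (V n <= l2) by (apply Hv1; exists n; auto). lra.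
    + intros w Hw. apply Rnot_lt_le. intros Hlt. set (g := l1 + l2 - w).
      assert (Happrox : forall (W : nat -> R) l, is_lub (fun y => exists n, y = W n) l ->
                          exists n, l - g / 2 < W n).
      { intros W l [_ Hl]. apply NNPP. intros Hno. assert (l <= l - g / 2); [|unfold g in *; lra].
        apply Hl. intros y [n ->]. apply Rnot_lt_le. intros Hc. apply Hno. exists n; auto. }
      destruct (Happrox U l1 (conj Hu1 Hu2)) as [n1 H1].
      destruct (Happrox V l2 (conj Hv1 Hv2)) as [n2 H2].
      assert (U n1 <= U (Nat.max n1 n2)) by (apply HU; lia).
      assert (V n2 <= V (Nat.max n1 n2)) by (apply HV; lia).
      assert (U (Nat.max n1 n2) + V (Nat.max n1 n2) <= w) by (apply Hw; exists (Nat.max n1 n2); auto).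
      unfold g in *. lra.
  - intros [M HM]. apply (Hunb V U HU Hv). exists M. intros y [n ->].
    rewrite Rplus_comm. apply HM. exists n. auto.
  - apply Hunb; auto.
  - apply Hunb; auto.
Qed.

Lemma ext_sup_squeeze A B v : nondecr A -> ext_sup B v ->
  (forall N, A (S N) <= B N) -> (forall N eps, 0 < eps -> exists M, B N - eps <= A M) ->
  ext_sup A v.
Proof.
  intros HA HB Hup Hlow. destruct v as [l|]; simpl in *.
  - destruct HB as [Hub Hlub]. split.
    + intros y [n ->]. assert (A n <= A (S n)) by (apply HA; lia).
      assert (B n <= l) by (apply Hub; exists n; auto). specialize (Hup n). lra.
    + intros w Hw. apply Hlub. intros y [N ->]. apply Rnot_lt_le. intros Hc.
      destruct (Hlow N ((B N - w) / 2) ltac:(lra)) as [M HM].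
      assert (A M <= w) by (apply Hw; exists M; auto). lra.
  - intros [w Hw]. apply HB. exists (w + 1). intros y [N ->].
    destruct (Hlow N 1 ltac:(lra)) as [M HM].
    assert (A M <= w) by (apply Hw; exists M; auto). lra.
Qed.

Lemma ext_sup_affine U V u v pr : nondecr U -> nondecr V ->
  (forall n, 0 <= U n) -> (forall n, 0 <= V n) -> 0 <= pr <= 1 ->
  ext_sup U u -> ext_sup V v ->
  ext_sup (fun n => 1 + ((1 - pr) * U n + pr * V n))
          (ER_plus (Some 1) (ER_plus (ER_scal (1 - pr) u) (ER_scal pr v))).
Proof.
  intros HU HV HU0 HV0 Hpr Hu Hv.
  assert (Hscal : forall W al, nondecr W -> 0 <= al -> nondecr (fun n => al * W n))
    by (intros W al HW Hal n m H; apply Rmult_le_compat_l; auto).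
  apply ext_sup_plus.
  - intros n m _. lra.
  - intros n m H. pose proof (Hscal U (1 - pr) HU ltac:(lra) n m H).
    pose proof (Hscal V pr HV ltac:(lra) n m H). lra.
  - apply ext_sup_const.
  - apply ext_sup_plus; try apply Hscal; auto; try lra; apply ext_sup_scal; auto; lra.
Qed.

Definition upd (c : word -> nat) (v : word) (j : nat) : word -> nat :=
  fun w => if list_eq_dec Nat.eq_dec w v then j else c w.

Lemma upd_eq c v j : upd c v j v = j.
Proof. unfold upd. destruct (list_eq_dec Nat.eq_dec v v); congruence. Qed.

Lemma upd_neq c v j w : w <> v -> upd c v j w = c w.
Proof. unfold upd. destruct (list_eq_dec Nat.eq_dec w v); congruence. Qed.

Lemma upd_comm c a b j l : a <> b -> upd (upd c b l) a j = upd (upd c a j) b l.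
Proof.
  intros H. apply functional_extensionality. intros w. unfold upd.
  destruct (list_eq_dec Nat.eq_dec w a); destruct (list_eq_dec Nat.eq_dec w b); subst; congruence.
Qed.

Lemma upd_upd c a j l : upd (upd c a l) a j = upd c a j.
Proof.
  apply functional_extensionality. intros w. unfold upd.
  destruct (list_eq_dec Nat.eq_dec w a); auto.
Qed.

Definition depends_only_on (F : (word -> nat) -> R) (P : word -> Prop) : Prop :=
  forall c c', (forall w, P w -> c w = c' w) -> F c = F c'.

Definition prodR (js : list nat) (f : nat -> R) : R := fold_right Rmult 1 (map f js).

Lemma prodR_ext js f g : (forall j, In j js -> f j = g j) -> prodR js f = prodR js g.
Proof. intros H. unfold prodR. f_equal. apply map_ext_in. auto. Qed.

Lemma prodR_01 js f : (forall j, In j js -> f j = 0 \/ f j = 1) ->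
  prodR js f = 0 \/ (prodR js f = 1 /\ forall j, In j js -> f j = 1).
Proof.
  induction js as [|j js IH]; intros H; unfold prodR in *; simpl.
  - right. split; auto. intros j [].
  - destruct (H j (or_introl eq_refl)) as [E|E]; rewrite E.
    + left. lra.
    + destruct IH as [E'|[E' H']]; [intros; apply H; simpl; auto| |].
      * left. rewrite E'. lra.
      * right. rewrite E'. split; [lra|]. intros j' [<-|Hj']; auto.
Qed.

Lemma prodR_const js B : prodR js (fun _ => B) = B ^ length js.
Proof. induction js; unfold prodR in *; simpl; auto. rewrite IHjs. auto. Qed.

Lemma prodR_seq_S n f : prodR (seq 0 (S n)) f = f 0%nat * prodR (seq 0 n) (fun j => f (S j)).
Proof. unfold prodR. simpl. rewrite <- seq_shift, map_map. reflexivity. Qed.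

Lemma prodR_if_lt_pow n t A B : (t <= n)%nat ->
  prodR (seq 0 n) (fun j => if Nat.ltb t (n - j) then A else B) = A ^ (n - t) * B ^ t.
Proof.
  revert t; induction n; intros t H.
  - replace t with 0%nat by lia. unfold prodR; simpl. lra.
  - rewrite prodR_seq_S. destruct (Nat.eq_dec t (S n)) as [->|E].
    + rewrite Nat.sub_diag. destruct (Nat.ltb_spec (S n) (S n - 0)); [lia|].
      rewrite (prodR_ext _ _ (fun _ => B)).
      * rewrite prodR_const, length_seq. simpl. lra.
      * intros j Hj. apply in_seq in Hj. destruct (Nat.ltb_spec (S n) (S n - S j)); auto; lia.
    + destruct (Nat.ltb_spec t (S n - 0)); [|lia].
      replace (S n - t)%nat with (S (n - t)) by lia.
      rewrite (prodR_ext _ _ (fun j => if Nat.ltb t (n - j) then A else B)) by reflexivity.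
      rewrite IHn by lia. simpl. lra.
Qed.

Definition subtree_rot (j : nat) (c : word -> nat) : word -> nat := fun w => c (j :: w).

Lemma subtree_rot_upd j c v l : subtree_rot j (upd c (j :: v) l) = upd (subtree_rot j c) v l.
Proof.
  apply functional_extensionality. intros w. unfold subtree_rot, upd.
  destruct (list_eq_dec Nat.eq_dec (j :: w) (j :: v)); destruct (list_eq_dec Nat.eq_dec w v);
    congruence.
Qed.

Lemma subtree_rot_upd_root j c l : subtree_rot j (upd c nil l) = subtree_rot j c.
Proof. apply functional_extensionality. intros w. unfold subtree_rot. apply upd_neq. discriminate. Qed.

Section Expectation.

Variables (r : nat -> R) (d : nat).
Hypothesis r_nonneg : forall j, (j <= d)%nat -> 0 <= r j.
Hypothesis r_sum : sumR (S d) r = 1.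

Lemma Efin_cons v vs F :
  Efin r d (v :: vs) F = sumR (S d) (fun j => r j * Efin r d vs (fun c => F (upd c v j))).
Proof. reflexivity. Qed.

Lemma Efin_ext vs F G : (forall c, F c = G c) -> Efin r d vs F = Efin r d vs G.
Proof. intros H. replace G with F by (apply functional_extensionality; auto). reflexivity. Qed.

Lemma Efin_const vs a : Efin r d vs (fun _ => a) = a.
Proof. induction vs; simpl; auto. rewrite IHvs, sumR_scal_r, r_sum. lra. Qed.

Lemma Efin_plus vs F G : Efin r d vs (fun c => F c + G c) = Efin r d vs F + Efin r d vs G.
Proof.
  revert F G; induction vs; intros F G; simpl; auto.
  rewrite <- sumR_plus. apply sumR_ext. intros j _. rewrite IHvs. lra.
Qed.

Lemma Efin_scal vs a F : Efin r d vs (fun c => a * F c) = a * Efin r d vs F.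
Proof.
  revert F; induction vs; intros F; simpl; auto.
  rewrite <- sumR_scal_l. apply sumR_ext. intros j _. rewrite IHvs. lra.
Qed.

Lemma Efin_le vs F G :
  (forall c, (forall w, In w vs -> (c w <= d)%nat) -> F c <= G c) -> Efin r d vs F <= Efin r d vs G.
Proof.
  revert F G; induction vs as [|v vs IH]; intros F G H.
  - apply H. intros w [].
  - rewrite !Efin_cons. apply sumR_le. intros j Hj. apply Rmult_le_compat_l; [apply r_nonneg; lia|].
    apply IH. intros c Hc. apply H. intros w [<-|Hw].
    + rewrite upd_eq. lia.
    + unfold upd. destruct (list_eq_dec Nat.eq_dec w v); [lia|auto].
Qed.

Lemma Efin_bounds vs F a b : (forall c, a <= F c <= b) -> a <= Efin r d vs F <= b.
Proof.
  intros H. rewrite <- (Efin_const vs a) at 1. rewrite <- (Efin_const vs b).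
  split; apply Efin_le; intros c _; apply H.
Qed.

Lemma Efin_swap a b vs F : Efin r d (a :: b :: vs) F = Efin r d (b :: a :: vs) F.
Proof.
  destruct (list_eq_dec Nat.eq_dec a b) as [<-|E]; auto.
  rewrite !Efin_cons.
  transitivity (sumR (S d) (fun j => sumR (S d) (fun l => r j * (r l *
      Efin r d vs (fun c => F (upd (upd c b l) a j)))))).
  - apply sumR_ext. intros j _. rewrite Efin_cons, <- sumR_scal_l. reflexivity.
  - rewrite sumR_swap. apply sumR_ext. intros l _. rewrite Efin_cons, <- sumR_scal_l.
    apply sumR_ext. intros j _.
    rewrite (Efin_ext vs _ (fun c => F (upd (upd c a j) b l))) by (intros c; rewrite upd_comm; auto).
    lra.
Qed.

Lemma Efin_perm vs ws F : Permutation vs ws -> Efin r d vs F = Efin r d ws F.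
Proof.
  intros Hp. revert F. induction Hp; intros F; auto.
  - rewrite !Efin_cons. apply sumR_ext. intros j _. f_equal. apply IHHp.
  - apply Efin_swap.
  - rewrite IHHp1. apply IHHp2.
Qed.

Lemma Efin_dup v vs F : In v vs -> Efin r d (v :: vs) F = Efin r d vs F.
Proof.
  intros Hin. destruct (in_split v vs Hin) as [l1 [l2 ->]].
  rewrite (Efin_perm (l1 ++ v :: l2) (v :: l1 ++ l2)) by (symmetry; apply Permutation_middle).
  rewrite (Efin_perm (v :: l1 ++ v :: l2) (v :: v :: l1 ++ l2)) by (constructor; symmetry;
    apply Permutation_middle).
  rewrite !Efin_cons. apply sumR_ext. intros j _. f_equal. rewrite Efin_cons.
  rewrite (sumR_ext _ _ (fun l => r l * Efin r d (l1 ++ l2) (fun c => F (upd c v j)))).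
  - rewrite sumR_scal_r, r_sum. lra.
  - intros l _. f_equal. apply Efin_ext. intros c. rewrite upd_upd. auto.
Qed.

Lemma Efin_nodup vs F : Efin r d vs F = Efin r d (nodup (list_eq_dec Nat.eq_dec) vs) F.
Proof.
  revert F; induction vs as [|v vs IH]; intros F; auto. cbn [nodup].
  destruct (in_dec (list_eq_dec Nat.eq_dec) v vs) as [H|H].
  - rewrite Efin_dup; auto.
  - rewrite !Efin_cons. apply sumR_ext. intros j _. f_equal. apply IH.
Qed.

Lemma Efin_same_elems vs ws F : (forall w, In w vs <-> In w ws) ->
  Efin r d vs F = Efin r d ws F.
Proof.
  intros H. rewrite (Efin_nodup vs), (Efin_nodup ws).
  apply Efin_perm. apply NoDup_Permutation; try apply NoDup_nodup.
  intros w. rewrite !nodup_In. auto.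
Qed.

Lemma Efin_app_indep ws vs F : depends_only_on F (fun w => In w ws) ->
  Efin r d (ws ++ vs) F = Efin r d ws F.
Proof.
  revert F; induction ws as [|w ws IH]; intros F HF; simpl.
  - rewrite (Efin_ext vs F (fun _ => F (fun _ => 0%nat))) by (intros c; apply HF; intros w []).
    apply Efin_const.
  - apply sumR_ext. intros j _. f_equal. apply IH.
    intros c c' H. apply HF. intros u Hu. unfold upd.
    destruct (list_eq_dec Nat.eq_dec u w); auto. destruct Hu; [congruence|auto].
Qed.

Lemma Efin_restrict vs ws F : incl ws vs -> depends_only_on F (fun w => In w ws) ->
  Efin r d vs F = Efin r d ws F.
Proof.
  intros Hi HF. rewrite (Efin_same_elems vs (ws ++ vs)).
  - apply Efin_app_indep; auto.
  - intros w. rewrite in_app_iff. split; auto. intros [H|H]; auto.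
Qed.

Lemma Efin_mult_indep ws1 ws2 F1 F2 :
  (forall w, In w ws1 -> ~ In w ws2) ->
  depends_only_on F1 (fun w => In w ws1) -> depends_only_on F2 (fun w => In w ws2) ->
  Efin r d (ws1 ++ ws2) (fun c => F1 c * F2 c) = Efin r d ws1 F1 * Efin r d ws2 F2.
Proof.
  revert F1; induction ws1 as [|w ws IH]; intros F1 Hdisj H1 H2; simpl.
  - rewrite (Efin_ext ws2 _ (fun c => F1 (fun _ => 0%nat) * F2 c))
      by (intros c; f_equal; apply H1; intros u []).
    apply Efin_scal.
  - rewrite <- sumR_scal_r. apply sumR_ext. intros j _. rewrite Rmult_assoc. f_equal.
    rewrite (Efin_ext (ws ++ ws2) _ (fun c => F1 (upd c w j) * F2 c)).
    + apply IH.
      * intros u Hu. apply Hdisj. simpl; auto.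
      * intros c c' H. apply H1. intros u Hu. unfold upd.
        destruct (list_eq_dec Nat.eq_dec u w); auto. destruct Hu; [congruence|auto].
      * auto.
    + intros c. f_equal. apply H2. intros u Hu. unfold upd.
      destruct (list_eq_dec Nat.eq_dec u w) as [->|]; auto.
      exfalso. apply (Hdisj w); simpl; auto.
Qed.

Lemma Efin_subtree j L K :
  Efin r d (map (cons j) L) (fun c => K (subtree_rot j c)) = Efin r d L K.
Proof.
  revert K; induction L as [|v L IH]; intros K; auto.
  cbn [map]. rewrite !Efin_cons. apply sumR_ext. intros l _. f_equal.
  rewrite <- (IH (fun c => K (upd c v l))). apply Efin_ext. intros c. rewrite subtree_rot_upd. auto.
Qed.

Lemma Efin_subtrees_prod L js (K : nat -> (word -> nat) -> R) : NoDup js ->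
  (forall j, depends_only_on (K j) (fun w => In w L)) ->
  Efin r d (flat_map (fun j => map (cons j) L) js) (fun c => prodR js (fun j => K j (subtree_rot j c)))
  = prodR js (fun j => Efin r d L (K j)).
Proof.
  intros Hnd HK. induction js as [|j js IH]; [reflexivity|].
  inversion Hnd; subst. cbn [flat_map].
  change (prodR (j :: js) (fun j0 => Efin r d L (K j0))) with
    (Efin r d L (K j) * prodR js (fun j0 => Efin r d L (K j0))).
  rewrite <- IH, <- (Efin_subtree j L (K j)) by auto.
  apply Efin_mult_indep; auto.
  - intros w Hw Hw'. apply in_map_iff in Hw as [u [<- _]].
    apply in_flat_map in Hw' as [j' [Hj' Hw']]. apply in_map_iff in Hw' as [u' [E _]].
    inversion E; subst. auto.
  - intros c c' H. apply (HK j). intros w Hw. apply H. apply in_map; auto.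
  - intros c c' H. apply prodR_ext. intros j' Hj'. apply (HK j'). intros w Hw.
    apply H. apply in_flat_map. exists j'. split; auto. apply in_map; auto.
Qed.

End Expectation.

Definition letters_lt (d : nat) (w : word) : Prop := Forall (fun a => (a < d)%nat) w.

Lemma words_len_spec d n w : In w (words_len d n) <-> length w = n /\ letters_lt d w.
Proof.
  unfold letters_lt. revert w; induction n; intros w; simpl.
  - split; [intros [<-|[]]; simpl; auto|]. intros [H _]. destruct w; [auto|discriminate].
  - rewrite in_flat_map. split.
    + intros [u [Hu Hw]]. apply in_map_iff in Hw as [a [<- Hin]].
      apply IHn in Hu as [Hl Hv]. apply in_seq in Hin.
      rewrite length_app. simpl. split; [lia|]. apply Forall_app. split; auto. constructor; auto; lia.
    + intros [Hl Hv]. destruct w as [|b w0]; [discriminate|].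
      pose proof (app_removelast_last 0%nat (l := b :: w0) ltac:(discriminate)) as E.
      rewrite E in Hv, Hl. apply Forall_app in Hv as [Hv1 Hv2]. apply Forall_inv in Hv2.
      rewrite length_app in Hl. cbn [length] in Hl.
      exists (removelast (b :: w0)). split.
      * apply IHn. split; [lia|auto].
      * apply in_map_iff. exists (last (b :: w0) 0%nat). split; [symmetry; auto|].
        apply in_seq. lia.
Qed.

Lemma words_upto_spec d N w : In w (words_upto d N) <-> (length w < N)%nat /\ letters_lt d w.
Proof.
  unfold words_upto. rewrite in_flat_map. split.
  - intros [n [Hn Hw]]. apply in_seq in Hn. apply words_len_spec in Hw as [Hw1 Hw2]. split; [lia|auto].
  - intros [Hl Hv]. exists (length w). split; [apply in_seq; lia|]. apply words_len_spec; auto.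
Qed.

Lemma nil_in_words_upto d N : (1 <= N)%nat -> In nil (words_upto d N).
Proof. intros H. apply words_upto_spec. split; simpl; [lia|constructor]. Qed.

Lemma words_upto_incl d N N' : (N <= N')%nat -> incl (words_upto d N) (words_upto d N').
Proof.
  intros H w Hw. apply words_upto_spec in Hw as [? ?]. apply words_upto_spec. split; [lia|auto].
Qed.

Lemma cons_in_words_upto d N j w : (j < d)%nat -> In w (words_upto d N) ->
  In (j :: w) (words_upto d (S N)).
Proof.
  intros Hj Hw. apply words_upto_spec in Hw as [H1 H2]. apply words_upto_spec. simpl.
  split; [lia|constructor; auto].
Qed.

Lemma root_subtrees_in_words_upto d N M js : (S N <= M)%nat -> (forall j, In j js -> (j < d)%nat) ->
  incl (nil :: flat_map (fun j => map (cons j) (words_upto d N)) js) (words_upto d M).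
Proof.
  intros HM Hjs w [<-|Hw].
  - apply nil_in_words_upto. lia.
  - apply in_flat_map in Hw as [j [Hj Hw]]. apply in_map_iff in Hw as [u [<- Hu]].
    apply (words_upto_incl d (S N) M); auto. apply cons_in_words_upto; auto.
Qed.

Section ContourTrunc.

Local Open Scope nat_scope.

Definition subtree_part (i : nat) (A : list word) : list word :=
  flat_map (fun w => match w with j :: u => if Nat.eqb j i then [u] else [] | [] => [] end) A.

Lemma subtree_part_spec i A w : In w (subtree_part i A) <-> In (i :: w) A.
Proof.
  unfold subtree_part. rewrite in_flat_map. split.
  - intros [[|j u] [Hu Hw]]; [destruct Hw|].
    destruct (Nat.eqb_spec j i); [|destruct Hw]. destruct Hw as [<-|[]]. subst; auto.
  - intros H. exists (i :: w). rewrite Nat.eqb_refl. simpl; auto.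
Qed.

Lemma ft_ge A x n m : n <= ft A x n m.
Proof.
  revert n; induction m; intros n; simpl; auto.
  destruct (in_dec _ _ _); auto. specialize (IHm (S n)); lia.
Qed.

Lemma ft_le A x n m : ft A x n m <= n + m.
Proof.
  revert n; induction m; intros n; simpl; try lia.
  destruct (in_dec _ _ _); try lia. specialize (IHm (S n)); lia.
Qed.

Lemma ft_incl A B x n m : incl A B -> ft A x n m <= ft B x n m.
Proof.
  intros H. revert n; induction m; intros n; simpl; auto.
  destruct (in_dec (list_eq_dec Nat.eq_dec) (prefix x n) A) as [Ha|Ha].
  - destruct (in_dec (list_eq_dec Nat.eq_dec) (prefix x n) B) as [Hb|Hb]; auto. exfalso; auto.
  - apply (ft_ge B x n (S m)).
Qed.

Lemma ft_mono_len A x n m m' : m <= m' -> ft A x n m <= ft A x n m'.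
Proof.
  revert n m'; induction m; intros n m' H; simpl; [apply ft_ge|].
  destruct m' as [|m']; [lia|]. simpl. destruct (in_dec _ _ _); auto. apply IHm. lia.
Qed.

Lemma prefix_scons i x n : prefix (scons i x) (S n) = i :: prefix x n.
Proof. unfold prefix. simpl. f_equal. rewrite <- seq_shift, map_map. reflexivity. Qed.

Lemma ft_scons A i x n m : ft A (scons i x) (S n) m = S (ft (subtree_part i A) x n m).
Proof.
  revert n; induction m; intros n; simpl; auto. rewrite prefix_scons.
  destruct (in_dec (list_eq_dec Nat.eq_dec) (i :: prefix x n) A) as [H|H];
  destruct (in_dec (list_eq_dec Nat.eq_dec) (prefix x n) (subtree_part i A)) as [H'|H'];
  rewrite subtree_part_spec in H'; [apply IHm | tauto | tauto | reflexivity].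
Qed.

Lemma contour_trunc_scons A i x N :
  contour_trunc A (scons i x) (S N) =
  if in_dec (list_eq_dec Nat.eq_dec) [i] A then S (contour_trunc (subtree_part i A) x N) else 1.
Proof.
  unfold contour_trunc. destruct N as [|M]; simpl; [destruct (in_dec _ _ _); auto|].
  change (prefix (scons i x) 1) with [i].
  destruct (in_dec (list_eq_dec Nat.eq_dec) [i] A); auto. apply ft_scons.
Qed.

Lemma contour_trunc_incl A B x N : incl A B -> contour_trunc A x N <= contour_trunc B x N.
Proof. intros H. destruct N; simpl; auto. apply ft_incl; auto. Qed.

Lemma contour_trunc_mono A x N N' : N <= N' -> contour_trunc A x N <= contour_trunc A x N'.
Proof. intros H. destruct N, N'; simpl; try lia. apply ft_mono_len. lia. Qed.

Lemma contour_trunc_le A x N : contour_trunc A x N <= N.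
Proof. destruct N; simpl; auto. pose proof (ft_le A x 1 N). lia. Qed.

End ContourTrunc.

Record state := mkState
  { st_pos : option word; st_rot : word -> nat; st_vis : nat; st_range : list word }.

Section Walk.

Variable d : nat.
Local Open Scope nat_scope.

Definition halted (k N : nat) (s : state) : bool :=
  Nat.eqb (st_vis s) k ||
  match st_pos s with None => false | Some v => Nat.leb N (length v) end.

Definition next_pos (v : word) (r' : nat) : option word :=
  if Nat.eqb r' 0 then (match v with nil => None | _ => Some (removelast v) end)
  else Some (v ++ [d - r']).

Definition step (s : state) : state :=
  match st_pos s with
  | None => mkState (Some nil) (st_rot s) (st_vis s) (nil :: st_range s)
  | Some v =>
    let r' := Nat.modulo (st_rot s v + 1) (d + 1) in
    let rot' := upd (st_rot s) v r' in
    match next_pos v r' with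
    | None => mkState None rot' (S (st_vis s)) (st_range s)
    | Some w => mkState (Some w) rot' (st_vis s) (w :: st_range s)
    end
  end.

Fixpoint walk (k f N : nat) (s : state) : state :=
  match f with
  | O => s
  | S f' => if halted k N s then s else walk k f' N (step s)
  end.

Lemma run_walk k f N pos rot vis range :
  run d k f N pos rot vis range = st_range (walk k f N (mkState pos rot vis range)).
Proof.
  revert pos rot vis range; induction f as [|f IH]; intros pos rot vis range; simpl; auto.
  unfold halted; simpl. destruct (Nat.eqb vis k); simpl; auto.
  destruct pos as [v|]; simpl; [|apply IH].
  destruct (Nat.leb N (length v)); simpl; auto.
  unfold step, next_pos, upd; simpl.
  destruct (Nat.eqb ((rot v + 1) mod (d + 1)) 0); [destruct v|]; apply IH.
Qed.

Lemma walk_halted k f N s : halted k N s = true -> walk k f N s = s.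
Proof. destruct f; simpl; auto. intros H; rewrite H; auto. Qed.

Lemma walk_S k f N s : halted k N s = false -> walk k (S f) N s = walk k f N (step s).
Proof. intros H; simpl; rewrite H; auto. Qed.

Lemma walk_add k f g N s : walk k (f + g) N s = walk k g N (walk k f N s).
Proof.
  revert s; induction f; intros s; simpl; auto.
  destruct (halted k N s) eqn:H; auto. rewrite walk_halted; auto.
Qed.

Lemma step_range s : incl (st_range s) (st_range (step s)).
Proof.
  unfold step. destruct (st_pos s) as [v|]; [destruct (next_pos v _)|]; simpl; auto using incl_tl, incl_refl.
Qed.

Lemma walk_range k f N s : incl (st_range s) (st_range (walk k f N s)).
Proof.
  revert s; induction f; intros s; simpl; [apply incl_refl|].
  destruct (halted k N s); [apply incl_refl|]. eapply incl_tran; [apply step_range|apply IHf].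
Qed.

Lemma walk_range_fuel_mono k f f' N s : f <= f' ->
  incl (st_range (walk k f N s)) (st_range (walk k f' N s)).
Proof.
  intros H. replace f' with (f + (f' - f)) by lia. rewrite walk_add. apply walk_range.
Qed.

Lemma halted_depth_mono k N N' s : N <= N' -> halted k N' s = true -> halted k N s = true.
Proof.
  unfold halted. intros HN H. destruct (Nat.eqb (st_vis s) k); auto. simpl in *.
  destruct (st_pos s); auto. apply Nat.leb_le. apply Nat.leb_le in H. lia.
Qed.

Lemma walk_range_depth_mono k f N N' s : N <= N' ->
  incl (st_range (walk k f N s)) (st_range (walk k f N' s)).
Proof.
  intros HN; revert s; induction f; intros s; simpl; [apply incl_refl|].
  destruct (halted k N' s) eqn:H'.
  - rewrite (halted_depth_mono k N N' s HN H'). apply incl_refl.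
  - destruct (halted k N s); [|apply IHf]. eapply incl_tran; [apply step_range|apply walk_range].
Qed.

Definition completes (k f N : nat) (s : state) : Prop := st_vis (walk k f N s) = k.

Lemma completes_stable k f f' N N' s : f <= f' -> N <= N' ->
  completes k f N s -> walk k f' N' s = walk k f N s.
Proof.
  unfold completes. intros Hf HN. revert s f' Hf; induction f; intros s f' Hf Hc; simpl in *.
  - apply walk_halted. unfold halted. rewrite Hc, Nat.eqb_refl. auto.
  - destruct (halted k N s) eqn:H.
    + apply walk_halted. unfold halted. rewrite Hc, Nat.eqb_refl. auto.
    + destruct f' as [|f']; [lia|]. simpl.
      destruct (halted k N' s) eqn:H'; [rewrite (halted_depth_mono k N N' s HN H') in H; discriminate|].
      apply IHf; auto. lia.
Qed.

Lemma completes_mono k f f' N N' s : f <= f' -> N <= N' ->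
  completes k f N s -> completes k f' N' s.
Proof. intros. unfold completes. erewrite completes_stable; eauto. Qed.

Lemma walk_range_incl_final k N s n : st_vis (walk k n N s) = k ->
  forall f, incl (st_range (walk k f N s)) (st_range (walk k n N s)).
Proof.
  intros Hv f. destruct (Nat.le_ge_cases f n) as [H|H].
  - apply walk_range_fuel_mono; auto.
  - rewrite (completes_stable k n f N N s); [apply incl_refl| | |]; auto.
Qed.

Definition letters_ok (s : state) : Prop :=
  match st_pos s with Some v => letters_lt d v | None => True end.

Hypothesis d_pos : 1 <= d.

Lemma letters_ok_step s : letters_ok s -> letters_ok (step s).
Proof.
  unfold letters_ok, letters_lt, step, next_pos. destruct (st_pos s) as [v|]; simpl; auto.
  intros Hv. destruct (Nat.eqb_spec ((st_rot s v + 1) mod (d + 1)) 0); simpl.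
  - destruct v as [|a v]; simpl; auto.
    rewrite (app_removelast_last 0 (l := a :: v)) in Hv by discriminate.
    apply Forall_app in Hv. tauto.
  - apply Forall_app. split; auto. constructor; auto. lia.
Qed.

Definition agree_below (N : nat) (s1 s2 : state) : Prop :=
  st_pos s1 = st_pos s2 /\ st_vis s1 = st_vis s2 /\ st_range s1 = st_range s2 /\ letters_ok s1 /\
  (forall w, length w < N -> letters_lt d w -> st_rot s1 w = st_rot s2 w).

Lemma agree_below_step k N s1 s2 : agree_below N s1 s2 -> halted k N s1 = false ->
  agree_below N (step s1) (step s2).
Proof.
  intros (Hp & Hv & Hr & Hval & Hrot) Hh.
  assert (Hval' := letters_ok_step s1 Hval).
  destruct s1 as [p1 r1 v1 g1], s2 as [p2 r2 v2 g2]; simpl in *; subst.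
  unfold step in *; simpl in *. unfold letters_ok in *; simpl in *.
  destruct p2 as [v|]; [|repeat split; auto].
  assert (Hlt : length v < N).
  { unfold halted in Hh; simpl in Hh. apply Bool.orb_false_iff in Hh as [_ Hh]. apply Nat.leb_gt in Hh. auto. }
  rewrite (Hrot v Hlt Hval) in *.
  destruct (next_pos v _); simpl in *; repeat split; auto;
    intros w0 Hw Hw'; simpl; unfold upd; destruct (list_eq_dec Nat.eq_dec w0 v); auto.
Qed.

Lemma agree_below_walk k f N s1 s2 : agree_below N s1 s2 ->
  agree_below N (walk k f N s1) (walk k f N s2).
Proof.
  revert s1 s2; induction f; intros s1 s2 HA; simpl; auto.
  replace (halted k N s2) with (halted k N s1)
    by (destruct HA as (Hp & Hv & _); unfold halted; rewrite Hp, Hv; auto).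
  destruct (halted k N s1) eqn:Hh; auto. apply IHf. apply (agree_below_step k); auto.
Qed.

Definition root_start (c : word -> nat) : state := mkState (Some nil) c 0 [nil].

Lemma run_root_start k f N c : run d k f N (Some nil) c 0 [nil] = st_range (walk k f N (root_start c)).
Proof. apply run_walk. Qed.

Lemma walk_locality k f N c c' :
  (forall w, length w < N -> letters_lt d w -> c w = c' w) ->
  agree_below N (walk k f N (root_start c)) (walk k f N (root_start c')).
Proof.
  intros H. apply agree_below_walk. unfold agree_below, letters_ok, letters_lt; simpl. repeat split; auto.
Qed.

End Walk.

Ltac case_nat_tests :=
  repeat match goal with
  | |- context [Nat.eqb ?a ?b] => destruct (Nat.eqb_spec a b)
  | |- context [Nat.ltb ?a ?b] => destruct (Nat.ltb_spec a b)
  | |- context [Nat.leb ?a ?b] => destruct (Nat.leb_spec a b)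
  | H : context [Nat.eqb ?a ?b] |- _ => destruct (Nat.eqb_spec a b)
  | H : context [Nat.ltb ?a ?b] |- _ => destruct (Nat.ltb_spec a b)
  | H : context [Nat.leb ?a ?b] |- _ => destruct (Nat.leb_spec a b)
  end.

Section SubtreeWalk.

Variable d : nat.
Local Open Scope nat_scope.

Lemma rot_next r : r <= d -> Nat.modulo (r + 1) (d + 1) = if Nat.eqb r d then 0 else r + 1.
Proof.
  intros H. destruct (Nat.eqb_spec r d) as [->|].
  - apply Nat.Div0.mod_same.
  - apply Nat.mod_small. lia.
Qed.

Lemma upd_subtree_rot (c c' : word -> nat) j w l w' : (forall u, c' u = c (j :: u)) ->
  upd c' w l w' = upd c (j :: w) l (j :: w').
Proof.
  intros H. unfold upd.
  destruct (list_eq_dec Nat.eq_dec w' w); destruct (list_eq_dec Nat.eq_dec (j :: w') (j :: w));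
    subst; auto; congruence.
Qed.

(* From its initial value [r0] the root rotor takes the values r0+1, ..., d, 0, 1, ..., d, 0, ...,
   sending the walk to child [d - value] (to the sink on 0): child [j] is entered during the
   first excursion from the sink iff r0 < d - j, and during every later one. *)
Definition sub_target (k j r0 : nat) : nat := if Nat.ltb r0 (d - j) then k else k - 1.

Definition sub_returns (j r0 rot vis : nat) : nat :=
  if Nat.eqb vis 0 then (if Nat.ltb r0 (d - j) then Nat.b2n (Nat.leb (d - j) rot) else 0)
  else Nat.b2n (Nat.ltb r0 (d - j)) + (vis - 1) + Nat.b2n (Nat.leb (d - j) rot).

(* [t] is the walk on subtree [j] traced by [s]: it is at [w] when [s] is at [j :: w], and at
   its sink otherwise; [sub_returns] counts its returns to the sink given the root rotor. *)
Definition sub_pos_rel (j r0 : nat) (s t : state) : Prop :=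
  match st_pos s with
  | Some (j' :: w) =>
      if Nat.eqb j' j then
        st_pos t = Some w /\ S (st_vis t) = sub_returns j r0 (st_rot s nil) (st_vis s)
      else st_pos t = None /\ st_vis t = sub_returns j r0 (st_rot s nil) (st_vis s)
  | _ => st_pos t = None /\ st_vis t = sub_returns j r0 (st_rot s nil) (st_vis s)
  end.

Record sub_sim (k r0 j : nat) (s t : state) : Prop := {
  sim_child : j < d;
  sim_r0 : r0 <= d;
  sim_k : 1 <= k;
  sim_rot : forall w, st_rot t w = st_rot s (j :: w);
  sim_root_rot : st_rot s nil <= d;
  sim_first : st_vis s = 0 -> r0 <= st_rot s nil;
  sim_sink_rot : st_pos s = None -> st_rot s nil = 0;
  sim_vis_le : st_vis s <= k;
  sim_vis_done : st_vis s = k -> st_pos s = None;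
  sim_range : forall w, In (j :: w) (st_range s) <-> In w (st_range t);
  sim_pos : sub_pos_rel j r0 s t }.

Definition moves_in_subtree (j : nat) (s : state) : bool :=
  match st_pos s with
  | Some (j' :: _) => Nat.eqb j' j
  | Some nil => Nat.eqb (Nat.modulo (st_rot s nil + 1) (d + 1)) (d - j)
  | None => false
  end.

Lemma sub_sim_step_root k r0 j s t : sub_sim k r0 j s t -> st_pos s = Some nil -> st_vis s <> k ->
  forall Nsub,
  (moves_in_subtree j s = true ->
     halted (sub_target k j r0) Nsub t = false /\ sub_sim k r0 j (step d s) (step d t)) /\
  (moves_in_subtree j s = false -> sub_sim k r0 j (step d s) t).
Proof.
  intros [Hj Hr0 Hk Hrot Hroot Hfirst Hsink Hvle Hvdone Hrange Hpos] Hs Hv Nsub.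
  destruct s as [pos rot v range]; simpl in *; subst pos.
  unfold sub_pos_rel in Hpos; simpl in Hpos. destruct Hpos as [Hp Hc].
  unfold moves_in_subtree, step; simpl. rewrite (rot_next (rot nil)) by lia.
  destruct (Nat.eqb_spec (rot nil) d) as [E|E].
  - simpl. split; intros H; [exfalso; destruct (d - j) eqn:Ej; [lia|discriminate]|].
    split; simpl; rewrite ?upd_eq; auto; try lia; try discriminate.
    unfold sub_pos_rel; simpl. split; auto. rewrite Hc, E. rewrite ?upd_eq; unfold sub_returns, Nat.b2n.
    case_nat_tests; simpl; lia.
  - assert (Hn : next_pos d [] (rot [] + 1) = Some [d - (rot [] + 1)])
      by (unfold next_pos; destruct (Nat.eqb_spec (rot [] + 1) 0); [lia|reflexivity]).
    rewrite Hn. split; intros H.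
    + apply Nat.eqb_eq in H. rewrite Hp. simpl. split.
      * unfold halted; simpl. rewrite Hp, Hc. rewrite ?upd_eq; unfold sub_target, sub_returns, Nat.b2n.
        case_nat_tests; simpl; lia.
      * replace (d - (rot [] + 1)) with j by lia.
        split; simpl; rewrite ?upd_eq; auto; try lia; try discriminate.
        -- intros w. rewrite <- Hrange. split; intros [H'|H']; auto; left; congruence.
        -- unfold sub_pos_rel; simpl. rewrite Nat.eqb_refl. split; auto.
           rewrite Hc. rewrite ?upd_eq; unfold sub_returns, Nat.b2n. case_nat_tests; simpl; lia.
    + split; simpl; rewrite ?upd_eq; auto; try lia; try discriminate.
      * intros w. rewrite <- Hrange. split; [intros [H'|H']; auto|auto].
        inversion H'. apply Nat.eqb_neq in H. lia.
      * unfold sub_pos_rel; simpl. apply Nat.eqb_neq in H.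
        destruct (Nat.eqb_spec (d - (rot [] + 1)) j); [lia|]. split; auto.
        rewrite Hc. rewrite ?upd_eq; unfold sub_returns, Nat.b2n. case_nat_tests; simpl; lia.
Qed.

Lemma sub_sim_step_inside k r0 j s t w Nsub : sub_sim k r0 j s t -> st_pos s = Some (j :: w) ->
  st_vis s <> k -> length w < Nsub ->
  halted (sub_target k j r0) Nsub t = false /\ sub_sim k r0 j (step d s) (step d t).
Proof.
  intros [Hj Hr0 Hk Hrot Hroot Hfirst Hsink Hvle Hvdone Hrange Hpos] Hs Hv Hlen.
  destruct s as [pos rot v range]; simpl in *; subst pos.
  unfold sub_pos_rel in Hpos; simpl in Hpos. rewrite Nat.eqb_refl in Hpos. destruct Hpos as [Hp Hc].
  assert (Hlt : st_vis t < sub_target k j r0)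
    by (unfold sub_target, sub_returns, Nat.b2n in *; case_nat_tests; simpl in *; lia).
  split.
  - unfold halted. rewrite Hp. destruct (Nat.eqb_spec (st_vis t) (sub_target k j r0)); [lia|].
    simpl. apply Nat.leb_gt. lia.
  - assert (Hroot' : forall l, upd rot (j :: w) l [] = rot []) by (intros; apply upd_neq; discriminate).
    unfold step; simpl. rewrite Hp, Hrot.
    set (l := (rot (j :: w) + 1) mod (d + 1)).
    assert (Hrot' : forall u, upd (st_rot t) w l u = upd rot (j :: w) l (j :: u))
      by (intros; apply upd_subtree_rot; auto).
    unfold next_pos. destruct (Nat.eqb_spec l 0) as [El|El]; [destruct w as [|a w']|]; simpl;
      split; simpl; rewrite ?Hroot'; auto; try discriminate; try (intros; exfalso; lia);
      try (intros u; simpl; rewrite <- Hrange; intuition congruence);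
      unfold sub_pos_rel; cbn [st_pos st_rot st_vis]; rewrite ?Hroot', ?Nat.eqb_refl; auto.
Qed.

Lemma sub_sim_step_elsewhere k r0 j s t : sub_sim k r0 j s t ->
  st_pos s <> Some nil -> moves_in_subtree j s = false -> st_vis s <> k ->
  sub_sim k r0 j (step d s) t.
Proof.
  intros [Hj Hr0 Hk Hrot Hroot Hfirst Hsink Hvle Hvdone Hrange Hpos] Hs Hmv Hv.
  destruct s as [pos rot v range]; simpl in *.
  unfold moves_in_subtree in Hmv; unfold sub_pos_rel in Hpos; simpl in *.
  destruct pos as [[|j' w]|]; [now destruct Hs| |].
  - rewrite Hmv in Hpos. destruct Hpos as [Hp Hc]. apply Nat.eqb_neq in Hmv.
    assert (Hroot' : forall l, upd rot (j' :: w) l [] = rot []) by (intros; apply upd_neq; discriminate).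
    unfold step; simpl. set (l := (rot (j' :: w) + 1) mod (d + 1)).
    unfold next_pos. destruct (Nat.eqb_spec l 0) as [El|El]; [destruct w as [|a w']|]; simpl;
      split; simpl; rewrite ?Hroot'; auto; try discriminate; try (intros; exfalso; lia);
      try (intros u; rewrite Hrot; symmetry; apply upd_neq; congruence);
      try (intros u; simpl; rewrite <- Hrange; intuition congruence);
      unfold sub_pos_rel; cbn [st_pos st_rot st_vis]; rewrite ?Hroot'; auto;
      (destruct (Nat.eqb_spec j' j); [congruence|auto]).
  - destruct Hpos as [Hp Hc]. unfold step; simpl.
    split; simpl; auto; try discriminate; try (intros; exfalso; lia);
      try (intros u; simpl; rewrite <- Hrange; intuition congruence).
    unfold sub_pos_rel; simpl. auto.
Qed.

Lemma sub_sim_step k r0 j Nsub s t : sub_sim k r0 j s t -> halted k (S Nsub) s = false ->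
  (moves_in_subtree j s = true ->
     halted (sub_target k j r0) Nsub t = false /\ sub_sim k r0 j (step d s) (step d t)) /\
  (moves_in_subtree j s = false -> sub_sim k r0 j (step d s) t).
Proof.
  intros HS Hh. unfold halted in Hh. apply Bool.orb_false_iff in Hh as [Hv Hdepth].
  apply Nat.eqb_neq in Hv.
  destruct (st_pos s) as [[|j' w]|] eqn:Hs.
  - apply sub_sim_step_root; auto.
  - unfold moves_in_subtree. rewrite Hs. apply Nat.leb_gt in Hdepth. simpl in Hdepth.
    destruct (Nat.eqb_spec j' j) as [->|]; split; intros H; try discriminate.
    + apply sub_sim_step_inside with w; auto. lia.
    + apply sub_sim_step_elsewhere; auto; [congruence|]. unfold moves_in_subtree. rewrite Hs. apply Nat.eqb_neq. auto.
  - split; intros H; [unfold moves_in_subtree in H; rewrite Hs in H; discriminate|].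
    apply sub_sim_step_elsewhere; auto. congruence.
Qed.

Lemma sub_sim_final k r0 j s t : sub_sim k r0 j s t -> st_vis s = k ->
  st_vis t = sub_target k j r0.
Proof.
  intros [Hj Hr0 Hk _ _ _ Hsink _ Hvdone _ Hpos] Hv.
  specialize (Hvdone Hv). unfold sub_pos_rel in Hpos. rewrite Hvdone in Hpos. destruct Hpos as [_ Hc].
  rewrite Hc, (Hsink Hvdone), Hv. unfold sub_returns, sub_target, Nat.b2n. case_nat_tests; simpl; lia.
Qed.

Lemma sub_sim_inside k r0 j s t w : sub_sim k r0 j s t -> st_vis s < k -> st_pos s = Some (j :: w) ->
  st_pos t = Some w /\ st_vis t < sub_target k j r0.
Proof.
  intros [Hj Hr0 Hk _ _ Hfirst _ _ _ _ Hpos] Hv Hs.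
  unfold sub_pos_rel in Hpos. rewrite Hs, Nat.eqb_refl in Hpos. destruct Hpos as [Hp Hc].
  split; auto. unfold sub_returns, sub_target, Nat.b2n in *. case_nat_tests; simpl in *; lia.
Qed.

Lemma sub_range_incl k r0 j Nsub : forall f s t f', sub_sim k r0 j s t -> f <= f' ->
  forall w, In (j :: w) (st_range (walk d k f (S Nsub) s)) ->
            In w (st_range (walk d (sub_target k j r0) f' Nsub t)).
Proof.
  induction f; intros s t f' HS Hf w Hw.
  - apply walk_range. apply (sim_range _ _ _ _ _ HS). auto.
  - destruct (halted k (S Nsub) s) eqn:Hh.
    + rewrite walk_halted in Hw by auto. apply walk_range. apply (sim_range _ _ _ _ _ HS). auto.
    + rewrite walk_S in Hw by auto. destruct (sub_sim_step k r0 j Nsub s t HS Hh) as [Hin Hout].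
      destruct (moves_in_subtree j s) eqn:Hm.
      * destruct (Hin eq_refl) as [Ht HS']. destruct f' as [|f']; [lia|].
        rewrite walk_S by auto. eapply IHf; [exact HS'| |exact Hw]. lia.
      * eapply IHf; [apply Hout; auto| |exact Hw]. lia.
Qed.

Lemma sub_completes_range k r0 j Nsub : forall f s t, sub_sim k r0 j s t ->
  completes d k f (S Nsub) s ->
  exists n, completes d (sub_target k j r0) n Nsub t /\
    forall w, In w (st_range (walk d (sub_target k j r0) n Nsub t)) ->
              In (j :: w) (st_range (walk d k f (S Nsub) s)).
Proof.
  unfold completes. induction f; intros s t HS Hv.
  - exists 0. simpl in *. split; [apply (sub_sim_final k r0 j s t HS Hv)|].
    intros w Hw. apply (sim_range _ _ _ _ _ HS). auto.
  - destruct (halted k (S Nsub) s) eqn:Hh.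
    + rewrite walk_halted in * by auto. exists 0. simpl.
      split; [apply (sub_sim_final k r0 j s t HS Hv)|].
      intros w Hw. apply (sim_range _ _ _ _ _ HS). auto.
    + rewrite walk_S in * by auto. destruct (sub_sim_step k r0 j Nsub s t HS Hh) as [Hin Hout].
      destruct (moves_in_subtree j s) eqn:Hm.
      * destruct (Hin eq_refl) as [Ht HS']. destruct (IHf _ _ HS' Hv) as [n [Hn1 Hn2]].
        exists (S n). rewrite walk_S by auto. auto.
      * apply IHf; auto.
Qed.

(* Bounds the number of steps of [s] that are not steps of one of the subtree walks. *)
Definition potential (k : nat) (s : state) : nat :=
  match st_pos s with
  | None => (d + 2) * (k - st_vis s)
  | Some _ => (d + 2) * (k - 1 - st_vis s) + (d + 1 - st_rot s nil)
  end.

Hypothesis d_pos : 1 <= d.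

Lemma potential_step k s : letters_ok d s -> st_rot s nil <= d ->
  (st_pos s = None -> st_rot s nil = 0) -> st_vis s < k ->
  (exists j0, j0 < d /\ moves_in_subtree j0 s = true /\
     (forall j, j <> j0 -> moves_in_subtree j s = false) /\ potential k (step d s) <= potential k s)
  \/ ((forall j, j < d -> moves_in_subtree j s = false) /\ potential k (step d s) < potential k s).
Proof.
  intros Hval Hr Hn Hv.
  destruct s as [pos rot v range]; unfold letters_ok, letters_lt, moves_in_subtree, potential, step in *;
    simpl in *.
  destruct pos as [[|j' w]|].
  - rewrite (rot_next (rot nil)) by lia.
    destruct (Nat.eqb_spec (rot nil) d) as [E|E].
    + right. unfold next_pos; simpl. split.
      * intros j Hj. destruct (d - j) eqn:Ej; [lia|reflexivity].
      * unfold upd; simpl. lia.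
    + left. exists (d - (rot nil + 1)). repeat split; [lia|apply Nat.eqb_eq; lia| |].
      * intros j Hj. apply Nat.eqb_neq. lia.
      * unfold next_pos. destruct (Nat.eqb_spec (rot [] + 1) 0); [lia|]. simpl. rewrite upd_eq. lia.
  - left. inversion Hval; subst. exists j'. repeat split; auto; [apply Nat.eqb_refl| |].
    + intros j Hj. apply Nat.eqb_neq. auto.
    + unfold next_pos.
      destruct (Nat.eqb ((rot (j' :: w) + 1) mod (d + 1)) 0); simpl;
        [destruct w; simpl|]; rewrite upd_neq by discriminate; lia.
  - right. split; [reflexivity|]. simpl. specialize (Hn eq_refl).
    replace (k - v) with (S (k - 1 - v)) by lia. rewrite Nat.mul_succ_r. lia.
Qed.

Lemma list_sum_map_dec (fs : nat -> nat) j0 a n : a <= j0 < a + n -> 1 <= fs j0 ->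
  list_sum (map fs (seq a n)) =
  S (list_sum (map (fun j => if Nat.eqb j j0 then fs j - 1 else fs j) (seq a n))).
Proof.
  revert a; induction n; intros a Ha H1; [lia|]. simpl.
  destruct (Nat.eqb_spec a j0) as [->|].
  - rewrite (map_ext_in fs (fun j => if Nat.eqb j j0 then fs j - 1 else fs j)); [lia|].
    intros j Hj. apply in_seq in Hj. destruct (Nat.eqb_spec j j0); auto; lia.
  - rewrite IHn by lia. lia.
Qed.

Lemma sub_sims_halted k r0 Nsub s t fs : letters_ok d s ->
  (forall j, j < d -> sub_sim k r0 j s (t j)) ->
  (forall j, j < d -> completes d (sub_target k j r0) (fs j) Nsub (t j)) ->
  halted k (S Nsub) s = true -> st_vis s = k.
Proof.
  intros Hval HS Hc Hh. unfold halted in Hh.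
  destruct (Nat.eqb_spec (st_vis s) k) as [E|E]; auto. cbn [orb] in Hh. exfalso.
  destruct (st_pos s) as [[|j' w]|] eqn:Hp; [discriminate| |discriminate].
  unfold letters_ok in Hval. rewrite Hp in Hval. inversion Hval; subst.
  pose proof (sim_vis_le _ _ _ _ _ (HS j' H1)).
  destruct (sub_sim_inside _ _ _ _ _ w (HS j' H1) ltac:(lia) Hp) as [Hp' Hlt].
  specialize (Hc j' H1). unfold completes in Hc. rewrite walk_halted in Hc; [lia|].
  unfold halted. rewrite Hp'. apply Nat.leb_le in Hh. cbn [length] in Hh.
  apply Bool.orb_true_iff. right. apply Nat.leb_le. lia.
Qed.

Lemma sub_sims_completes k r0 Nsub : forall f s (t : nat -> state) (fs : nat -> nat),
  letters_ok d s -> (forall j, j < d -> sub_sim k r0 j s (t j)) ->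
  (forall j, j < d -> completes d (sub_target k j r0) (fs j) Nsub (t j)) ->
  list_sum (map fs (seq 0 d)) + potential k s <= f ->
  completes d k f (S Nsub) s.
Proof.
  induction f; intros s t fs Hval HS Hc Hf;
    destruct (HS 0 ltac:(lia)) as [_ _ _ _ Hr _ Hn Hvk Hvkn _ _]; unfold completes.
  - simpl. unfold potential in Hf. destruct (st_pos s); [lia|]. nia.
  - destruct (halted k (S Nsub) s) eqn:Hh.
    + rewrite walk_halted by auto. apply (sub_sims_halted k r0 Nsub s t fs); auto.
    + rewrite walk_S by auto.
      assert (Hvlt : st_vis s < k)
        by (unfold halted in Hh; apply Bool.orb_false_iff in Hh as [Hh _]; apply Nat.eqb_neq in Hh; lia).
      destruct (potential_step k s Hval Hr Hn Hvlt) as [(j0 & Hj0 & Hs0 & Hso & Hph)|(Hso & Hph)].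
      * destruct (proj1 (sub_sim_step k r0 j0 Nsub s (t j0) (HS j0 Hj0) Hh) Hs0) as [Hth HS0].
        assert (Hf0 : 1 <= fs j0).
        { specialize (Hc j0 Hj0). unfold completes in Hc. destruct (fs j0); [|lia].
          simpl in Hc. unfold halted in Hth. rewrite Hc, Nat.eqb_refl in Hth. discriminate. }
        apply (IHf (step d s) (fun j => if Nat.eqb j j0 then step d (t j0) else t j)
                   (fun j => if Nat.eqb j j0 then fs j - 1 else fs j)).
        -- apply letters_ok_step; auto.
        -- intros j Hj. destruct (Nat.eqb_spec j j0) as [->|]; auto.
           apply (proj2 (sub_sim_step k r0 j Nsub s (t j) (HS j Hj) Hh)). auto.
        -- intros j Hj. destruct (Nat.eqb_spec j j0) as [->|]; auto.
           specialize (Hc j0 Hj). unfold completes in *.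
           destruct (fs j0) as [|m]; [lia|]. rewrite walk_S in Hc by auto.
           replace (S m - 1) with m by lia. auto.
        -- rewrite (list_sum_map_dec fs j0) in Hf by (auto; lia). lia.
      * apply (IHf (step d s) t fs); auto; [apply letters_ok_step; auto| |lia].
        intros j Hj. apply (proj2 (sub_sim_step k r0 j Nsub s (t j) (HS j Hj) Hh)). auto.
Qed.

End SubtreeWalk.

Section SubtreeContour.

Variable d : nat.
Local Open Scope nat_scope.

(* The value 0 for [m = 0] encodes g_0 = 0. *)
Definition contour_walk (m N : nat) (x : nat -> nat) (c : word -> nat) : nat :=
  if Nat.eqb m 0 then 0 else contour_trunc (run d m N N (Some nil) c 0 [nil]) x N.

Definition sink_start (j : nat) (c : word -> nat) : state := mkState None (subtree_rot j c) 0 [].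

Lemma sub_sim_start k j c : j < d -> c nil <= d -> 1 <= k ->
  sub_sim d k (c nil) j (root_start c) (sink_start j c).
Proof.
  intros Hj Hc Hk. split; simpl; auto; try lia; try discriminate.
  - intros w. split; [intros [H|H]; [discriminate|auto]|intros []].
  - unfold sub_pos_rel; simpl. split; auto. unfold sub_returns, Nat.b2n. case_nat_tests; simpl; lia.
Qed.

Lemma walk_sink_start m F N j c : 1 <= m ->
  walk d m (S F) N (sink_start j c) = walk d m F N (root_start (subtree_rot j c)).
Proof. intros Hm. rewrite walk_S; [reflexivity|]. unfold halted. simpl. destruct m; [lia|reflexivity]. Qed.

Lemma walk_sink_start_zero f N j c : walk d 0 f N (sink_start j c) = sink_start j c.
Proof. apply walk_halted. reflexivity. Qed.

Lemma contour_walk_le m N x c : contour_walk m N x c <= N.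
Proof. unfold contour_walk. destruct (Nat.eqb m 0); [lia|apply contour_trunc_le]. Qed.

Lemma contour_walk_scons_le k N i x c : i < d -> c nil <= d -> 1 <= k ->
  contour_walk k (S N) (scons i x) c
  <= 1 + contour_walk (sub_target d k i (c nil)) N x (subtree_rot i c).
Proof.
  intros Hi Hc Hk. unfold contour_walk at 1. destruct (Nat.eqb_spec k 0) as [Ek|Ek]; [lia|].
  rewrite run_root_start, contour_trunc_scons.
  pose proof (sub_range_incl d k (c nil) i N (S N) (root_start c) (sink_start i c) (S N)
                (sub_sim_start k i c Hi Hc Hk) (le_n _)) as Hincl.
  unfold contour_walk. destruct (Nat.eqb_spec (sub_target d k i (c nil)) 0) as [E|E].
  - rewrite E, walk_sink_start_zero in Hincl.
    destruct (in_dec _ _ _) as [Hin|Hin]; auto. destruct (Hincl nil Hin).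
  - destruct (in_dec _ _ _) as [Hin|Hin]; [|lia].
    rewrite walk_sink_start in Hincl by lia. rewrite run_root_start.
    apply le_n_S. apply contour_trunc_incl. intros w Hw. apply Hincl. apply subtree_part_spec; auto.
Qed.

Lemma contour_walk_scons_ge k M N i x c : i < d -> c nil <= d -> 1 <= k -> N <= M ->
  completes d k (S M) (S M) (root_start c) ->
  1 + contour_walk (sub_target d k i (c nil)) N x (subtree_rot i c)
  <= contour_walk k (S M) (scons i x) c.
Proof.
  intros Hi Hc Hk HNM Hcomp. unfold contour_walk at 2. destruct (Nat.eqb_spec k 0) as [Ek|Ek]; [lia|].
  rewrite run_root_start, contour_trunc_scons.
  destruct (sub_completes_range d k (c nil) i M (S M) (root_start c) (sink_start i c)
              (sub_sim_start k i c Hi Hc Hk) Hcomp) as [n [Hn Hsub]].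
  set (m := sub_target d k i (c nil)) in *.
  assert (Hincl : incl (st_range (walk d m (S N) M (sink_start i c)))
                       (st_range (walk d m n M (sink_start i c))))
    by (apply walk_range_incl_final; auto).
  assert (Hdepth := walk_range_depth_mono d m (S N) N M (sink_start i c) HNM).
  unfold contour_walk. destruct (Nat.eqb_spec m 0) as [E|E]; [destruct (in_dec _ _ _); lia|].
  rewrite walk_sink_start in Hdepth by lia. rewrite run_root_start.
  destruct (in_dec _ _ _) as [Hin|Hin].
  - apply le_n_S. eapply Nat.le_trans; [|apply contour_trunc_mono; eassumption].
    apply contour_trunc_incl. intros w Hw. apply subtree_part_spec, Hsub, Hincl, Hdepth. auto.
  - exfalso. apply Hin, Hsub, Hincl, Hdepth, walk_range. left. reflexivity.
Qed.

Hypothesis d_pos : 1 <= d.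

Lemma completes_of_subtrees k F c : c nil <= d -> 1 <= k ->
  (forall j, j < d -> completes d (sub_target d k j (c nil)) F F (root_start (subtree_rot j c))) ->
  completes d k (d * S F + (d + 2) * k) (S F) (root_start c).
Proof.
  intros Hc Hk H.
  apply (sub_sims_completes d d_pos k (c nil) F _ (root_start c) (fun j => sink_start j c) (fun _ => S F)).
  - constructor.
  - intros j Hj. apply sub_sim_start; auto.
  - intros j Hj. unfold completes.
    destruct (Nat.eqb_spec (sub_target d k j (c nil)) 0) as [E|E].
    + rewrite E, walk_sink_start_zero. reflexivity.
    + rewrite walk_sink_start by lia. apply H; auto.
  - assert (Hsum : forall n, list_sum (map (fun _ => S F) (seq 0 n)) = n * S F).
    { induction n; auto. rewrite seq_S, map_app, list_sum_app. simpl. lia. }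
    rewrite Hsum. unfold potential. simpl. nia.
Qed.

End SubtreeContour.

Section ContourExpectation.

Variables (r : nat -> R) (d : nat).
Hypothesis d_pos : (1 <= d)%nat.
Hypothesis r_nonneg : forall j, (j <= d)%nat -> 0 <= r j.
Hypothesis r_sum : sumR (S d) r = 1.

Definition g_trunc (m : nat) (x : nat -> nat) (N : nat) : R :=
  Efin r d (words_upto d N) (fun c => INR (contour_walk d m N x c)).

Lemma g_trunc_zero x N : g_trunc 0 x N = 0.
Proof. unfold g_trunc, contour_walk. simpl. apply Efin_const; auto. Qed.

Lemma g_val_ext_sup m x v : g_val r d m x v -> ext_sup (g_trunc m x) v.
Proof.
  destruct m as [|m]; simpl.
  - intros ->. replace (g_trunc 0 x) with (fun _ : nat => 0)
      by (apply functional_extensionality; intros N; rewrite g_trunc_zero; auto).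
    apply ext_sup_const.
  - intros H. replace (g_trunc (S m) x) with (Etrunc r d (S m) x); auto.
Qed.

Lemma contour_walk_local m N x :
  depends_only_on (fun c => INR (contour_walk d m N x c)) (fun w => In w (words_upto d N)).
Proof.
  intros c c' H. unfold contour_walk. destruct (Nat.eqb m 0); auto. rewrite !run_root_start.
  destruct (walk_locality d d_pos m N N c c') as (_ & _ & -> & _); auto.
  intros w Hl Hv. apply H. apply words_upto_spec; auto.
Qed.

Lemma contour_walk_mono m N x c : (contour_walk d m N x c <= contour_walk d m (S N) x c)%nat.
Proof.
  unfold contour_walk. destruct (Nat.eqb m 0); auto.
  eapply Nat.le_trans; [apply contour_trunc_mono with (N' := S N); lia|].
  apply contour_trunc_incl. rewrite !run_root_start. eapply incl_tran.
  - apply (walk_range_fuel_mono d m N (S N) N); lia.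
  - apply walk_range_depth_mono. lia.
Qed.

Lemma g_trunc_mono m x : nondecr (g_trunc m x).
Proof.
  intros N N' H. induction H; [lra|]. eapply Rle_trans; [apply IHle|]. unfold g_trunc.
  rewrite <- (Efin_restrict r d r_sum (words_upto d (S m0)) (words_upto d m0)).
  - apply Efin_le; auto. intros c _. apply le_INR, contour_walk_mono.
  - apply words_upto_incl. lia.
  - apply contour_walk_local.
Qed.

Lemma g_trunc_ge0 m x N : 0 <= g_trunc m x N.
Proof.
  refine (proj1 (Efin_bounds r d r_nonneg r_sum _ _ 0 (INR N) _)).
  intros c. split; [apply pos_INR|apply le_INR, contour_walk_le].
Qed.

Lemma Efin_split_contour k i N M x : (i < d)%nat -> (S N <= M)%nat ->
  Efin r d (words_upto d M)
    (fun c => INR (1 + contour_walk d (sub_target d k i (c nil)) N x (subtree_rot i c)))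
  = 1 + ((1 - p r (d - i)) * g_trunc (k - 1) x N + p r (d - i) * g_trunc k x N).
Proof.
  intros Hi HM.
  rewrite (Efin_restrict r d r_sum _ (nil :: map (cons i) (words_upto d N))).
  - rewrite Efin_cons.
    transitivity (sumR (S d) (fun t => r t * (1 + g_trunc (sub_target d k i t) x N))).
    + apply sumR_ext. intros t _. f_equal.
      set (K := fun c' => 1 + INR (contour_walk d (sub_target d k i t) N x c')).
      rewrite (Efin_ext r d _ _ (fun c => K (subtree_rot i c))).
      * unfold g_trunc. rewrite Efin_subtree. unfold K. rewrite Efin_plus, Efin_const; auto.
      * intros c. unfold K. rewrite upd_eq, subtree_rot_upd_root, plus_INR. simpl. lra.
    + transitivity (sumR (S d) r + sumR (S d) (fun t =>
          if Nat.ltb t (d - i) then r t * g_trunc k x N else r t * g_trunc (k - 1) x N)).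
      * rewrite <- sumR_plus. apply sumR_ext. intros t _. unfold sub_target.
        destruct (Nat.ltb t (d - i)); lra.
      * rewrite sumR_if_lt by lia. rewrite !sumR_scal_r, r_sum. unfold p. lra.
  - intros w [<-|Hw]; [apply nil_in_words_upto; lia|].
    apply in_map_iff in Hw as [u [<- Hin]].
    apply (words_upto_incl d (S N) M); auto. apply cons_in_words_upto; auto.
  - intros c c' H. rewrite (H nil) by (left; auto). rewrite !plus_INR. f_equal.
    apply contour_walk_local. intros w Hw. apply H. right. apply in_map; auto.
Qed.

Lemma g_trunc_scons_le k i N x : (i < d)%nat -> (1 <= k)%nat ->
  g_trunc k (scons i x) (S N)
  <= 1 + ((1 - p r (d - i)) * g_trunc (k - 1) x N + p r (d - i) * g_trunc k x N).
Proof.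
  intros Hi Hk. rewrite <- (Efin_split_contour k i N (S N) x) by auto.
  apply Efin_le; auto. intros c Hc. apply le_INR.
  apply contour_walk_scons_le; auto. apply Hc, nil_in_words_upto. lia.
Qed.

Definition completes_ind (m F : nat) (c : word -> nat) : R :=
  if Nat.eqb (st_vis (walk d m F F (root_start c))) m then 1 else 0.

Definition complete_prob (m F : nat) : R := Efin r d (words_upto d F) (completes_ind m F).

Lemma completes_ind_01 m F c : completes_ind m F c = 0 \/ completes_ind m F c = 1.
Proof. unfold completes_ind. destruct (Nat.eqb _ _); auto. Qed.

Lemma completes_ind_true m F c : completes d m F F (root_start c) -> completes_ind m F c = 1.
Proof. unfold completes_ind, completes. intros ->. rewrite Nat.eqb_refl. reflexivity. Qed.

Lemma completes_ind_local m F :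
  depends_only_on (completes_ind m F) (fun w => In w (words_upto d F)).
Proof.
  intros c c' H. unfold completes_ind.
  destruct (walk_locality d d_pos m F F c c') as (_ & -> & _); auto.
  intros w Hl Hv. apply H. apply words_upto_spec; auto.
Qed.

Lemma g_trunc_scons_ge k i N M x : (i < d)%nat -> (1 <= k)%nat -> (N <= M)%nat ->
  1 + ((1 - p r (d - i)) * g_trunc (k - 1) x N + p r (d - i) * g_trunc k x N)
    - INR (S N) * (1 - complete_prob k (S M))
  <= g_trunc k (scons i x) (S M).
Proof.
  intros Hi Hk HNM. rewrite <- (Efin_split_contour k i N (S M) x) by (auto; lia).
  unfold complete_prob, g_trunc.
  set (split_rv := fun c : word -> nat => INR (1 + contour_walk d (sub_target d k i (c nil)) N x (subtree_rot i c))).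
  transitivity (Efin r d (words_upto d (S M))
     (fun c => split_rv c + (- INR (S N) * 1 + INR (S N) * completes_ind k (S M) c))).
  { rewrite Efin_plus, Efin_plus, Efin_const, Efin_scal; auto. unfold split_rv. lra. }
  apply Efin_le; auto. intros c Hc.
  assert (Hc0 : (c nil <= d)%nat) by (apply Hc, nil_in_words_upto; lia).
  pose proof (pos_INR (contour_walk d k (S M) (scons i x) c)).
  assert (split_rv c <= INR (S N))
    by (apply le_INR; pose proof (contour_walk_le d (sub_target d k i (c nil)) N x (subtree_rot i c)); lia).
  unfold completes_ind. destruct (Nat.eqb_spec (st_vis (walk d k (S M) (S M) (root_start c))) k) as [E|E].
  - assert (split_rv c <= INR (contour_walk d k (S M) (scons i x) c))
      by (apply le_INR, contour_walk_scons_ge; auto).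
    lra.
  - lra.
Qed.

Lemma complete_prob_bounds m F : 0 <= complete_prob m F <= 1.
Proof. apply Efin_bounds; auto. intros c. destruct (completes_ind_01 m F c) as [-> | ->]; lra. Qed.

Lemma complete_prob_mono m F F' : (F <= F')%nat -> complete_prob m F <= complete_prob m F'.
Proof.
  intros HF. unfold complete_prob.
  rewrite <- (Efin_restrict r d r_sum (words_upto d F') (words_upto d F) (completes_ind m F)).
  - apply Efin_le; auto. intros c _. destruct (completes_ind_01 m F c) as [-> | E]; [|rewrite E].
    + destruct (completes_ind_01 m F' c) as [-> | ->]; lra.
    + rewrite completes_ind_true; [lra|]. apply (completes_mono d m F F' F F'); auto.
      unfold completes_ind in E. destruct (Nat.eqb_spec (st_vis (walk d m F F (root_start c))) m);
        auto. lra.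
  - apply words_upto_incl; auto.
  - apply completes_ind_local.
Qed.

Lemma complete_prob_zero F : complete_prob 0 F = 1.
Proof.
  unfold complete_prob. rewrite <- (Efin_const r d r_sum (words_upto d F) 1).
  apply Efin_ext. intros c. apply completes_ind_true. unfold completes. destruct F; reflexivity.
Qed.

Definition subtrees_complete_ind (m F : nat) (c : word -> nat) : R :=
  prodR (seq 0 d) (fun j => completes_ind (sub_target d m j (c nil)) F (subtree_rot j c)).

Lemma Efin_subtrees_complete m F M : (S F <= M)%nat ->
  Efin r d (words_upto d M) (subtrees_complete_ind m F)
  = sumR (S d) (fun t => r t * (complete_prob m F ^ (d - t) * complete_prob (m - 1) F ^ t)).
Proof.
  intros HFM. set (L := flat_map (fun j => map (cons j) (words_upto d F)) (seq 0 d)).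
  rewrite (Efin_restrict r d r_sum _ (nil :: L)).
  - rewrite Efin_cons. apply sumR_ext. intros t Ht. f_equal.
    transitivity (Efin r d L (fun c => prodR (seq 0 d)
                    (fun j => completes_ind (sub_target d m j t) F (subtree_rot j c)))).
    + apply Efin_ext. intros c. unfold subtrees_complete_ind. rewrite upd_eq.
      apply prodR_ext. intros j _. rewrite subtree_rot_upd_root. reflexivity.
    + unfold L. rewrite (Efin_subtrees_prod r d (words_upto d F) (seq 0 d)
                           (fun j => completes_ind (sub_target d m j t) F));
        [|apply seq_NoDup|intros; apply completes_ind_local].
      rewrite <- (prodR_if_lt_pow d t) by lia. apply prodR_ext. intros j _.
      unfold sub_target. destruct (Nat.ltb t (d - j)); reflexivity.
  - apply root_subtrees_in_words_upto; auto. intros j Hj. apply in_seq in Hj. lia.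
  - intros c c' H. unfold subtrees_complete_ind. rewrite (H nil) by (left; auto). apply prodR_ext.
    intros j Hj. apply completes_ind_local. intros w Hw. apply H. right.
    apply in_flat_map. exists j. split; auto. apply in_map; auto.
Qed.

Lemma subtrees_complete_ind_le m F c : (1 <= m)%nat -> (c nil <= d)%nat ->
  subtrees_complete_ind m F c <= completes_ind m (d * S F + (d + 2) * m) c.
Proof.
  intros Hm Hc. unfold subtrees_complete_ind.
  destruct (prodR_01 (seq 0 d) (fun j => completes_ind (sub_target d m j (c nil)) F (subtree_rot j c)))
    as [-> | [-> Hall]].
  - intros j _. apply completes_ind_01.
  - destruct (completes_ind_01 m (d * S F + (d + 2) * m) c) as [-> | ->]; lra.
  - rewrite completes_ind_true; [lra|].
    apply (completes_mono d m (d * S F + (d + 2) * m) _ (S F)); [lia|nia|].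
    apply completes_of_subtrees; auto. intros j Hj.
    specialize (Hall j ltac:(apply in_seq; lia)). unfold completes_ind in Hall. unfold completes.
    destruct (Nat.eqb_spec (st_vis (walk d (sub_target d m j (c nil)) F F (root_start (subtree_rot j c))))
                (sub_target d m j (c nil))); auto. lra.
Qed.

Lemma complete_prob_rec m F : (1 <= m)%nat ->
  sumR (S d) (fun t => r t * (complete_prob m F ^ (d - t) * complete_prob (m - 1) F ^ t))
  <= complete_prob m (d * S F + (d + 2) * m).
Proof.
  intros Hm. rewrite <- (Efin_subtrees_complete m F (d * S F + (d + 2) * m)) by nia.
  apply Efin_le; auto. intros c Hc. apply subtrees_complete_ind_le; auto.
  apply Hc, nil_in_words_upto. nia.
Qed.

End ContourExpectation.

Section Escape.

Variables (r : nat -> R) (d : nat).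
Hypothesis d_pos : (1 <= d)%nat.
Hypothesis r_nonneg : forall j, (j <= d)%nat -> 0 <= r j.
Hypothesis r_sum : sumR (S d) r = 1.
Hypothesis r_mean : INR (d - 1) <= sumR (S d) (fun j => INR j * r j).
Hypothesis r_top : 0 < r d.

Lemma complete_prob_escape k eps : 0 < eps -> exists F, 1 - eps <= complete_prob r d k F.
Proof.
  apply (q_escape d r r_nonneg r_sum r_mean d_pos r_top (complete_prob r d)); auto.
  - apply complete_prob_bounds; auto.
  - apply complete_prob_mono; auto.
  - apply complete_prob_zero; auto.
  - intros m F Hm. eexists. apply complete_prob_rec; auto.
Qed.

Lemma g_trunc_scons_approx k i x N eps : (i < d)%nat -> (1 <= k)%nat -> 0 < eps ->
  exists M, 1 + ((1 - p r (d - i)) * g_trunc r d (k - 1) x N + p r (d - i) * g_trunc r d k x N) - eps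
            <= g_trunc r d k (scons i x) M.
Proof.
  intros Hi Hk Heps.
  assert (HSN : 0 < INR (S N)) by (apply lt_0_INR; lia).
  destruct (complete_prob_escape k (eps / INR (S N))) as [F HF]; [apply Rdiv_lt_0_compat; lra|].
  exists (S (Nat.max N F)).
  pose proof (g_trunc_scons_ge r d d_pos r_nonneg r_sum k i N (Nat.max N F) x Hi Hk ltac:(lia)).
  pose proof (complete_prob_mono r d d_pos r_nonneg r_sum k F (S (Nat.max N F)) ltac:(lia)).
  assert (INR (S N) * (1 - complete_prob r d k (S (Nat.max N F))) <= INR (S N) * (eps / INR (S N)))
    by (apply Rmult_le_compat_l; lra).
  replace (INR (S N) * (eps / INR (S N))) with eps in * by (field; lra).
  lra.
Qed.

End Escape.

Theorem theoremA1 (d : nat) (r : nat -> R)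
  (hd : (2 <= d)%nat)
  (hr_nonneg : forall j, (j <= d)%nat -> 0 <= r j)
  (hr_sum : sumR (S d) r = 1)
  (hmean : INR (d - 1) <= sumR (S d) (fun j => INR j * r j))
  (hrd : 0 < r d) :
  forall (k : nat) (x : nat -> nat) (i : nat),
    (1 <= k)%nat -> (forall n, (x n < d)%nat) -> (i < d)%nat ->
    forall a b c : ER,
      g_val r d k (scons i x) a ->
      g_val r d (k - 1) x b ->
      g_val r d k x c ->
      a = ER_plus (Some 1)
            (ER_plus (ER_scal (1 - p r (d - i)) b) (ER_scal (p r (d - i)) c)).
Proof.
  (* The letters of [x] need not be below [d]: a larger letter only stops the contour there. *)
  intros k x i Hk _ Hi a b c Ha Hb Hc.
  assert (Hd : (1 <= d)%nat) by lia.
  apply (ext_sup_unique (g_trunc r d k (scons i x))); [apply g_val_ext_sup; auto|].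
  apply (ext_sup_squeeze _ (fun N => 1 + ((1 - p r (d - i)) * g_trunc r d (k - 1) x N
                                           + p r (d - i) * g_trunc r d k x N))).
  - apply g_trunc_mono; auto.
  - apply ext_sup_affine; try apply g_trunc_mono; try apply g_trunc_ge0;
      try apply g_val_ext_sup; auto.
    apply (p_bounds r d); auto. lia.
  - intros N. apply g_trunc_scons_le; auto.
  - intros N eps Heps. apply g_trunc_scons_approx; auto.
Qed.
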